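(* Let $G$ be an open localic groupoid, $Q=\mathcal O(G)$ its groupoid quantale with base locale $A=\mathcal O(G_0)$, and let $X$ be a fully open principal $G$-bundle over a locale $M$, with anchor $p:X\to G_0$, action $a:G_1\times_{G_0}X\to X$ and bundle map $\pi:X\to M$. Then $X$ is a principal $Q$-locale over $M$, with the structure $q\cdot x=a_!(q\otimes x)$, $b\triangleright x=p^*(b)\wedge x$ ($b\in A$), inner product $\langle x,y\rangle=\theta_!(x\otimes y)$ where $\theta:X\times_MX\to G_1$ is the map with $\langle\theta,\pi_2\rangle=\langle a,\pi_2\rangle^{-1}$, support $\varsigma_X=p_!$, and $\tilde\varsigma=\pi_!$.
   Context: An open localic groupoid $G$ has locales $G_0,G_1$, domain $d$ (open), range $r$, unit $u$, inverse $i$, multiplication $m$. Its quantale $Q=\mathcal O(G)=\mathcal O(G_1)$ is an involutive quantale (multiplication $m_!$, involution $i^*$), an $A$-$A$-bimodule with $a\triangleright q=d^*(a)\wedge q$, $q\triangleleft a=q\wedge r^*(a)$, with support $\varsigma_Q=d_!$ and $\upsilon=u^*$. A $G$-locale is a locale $X$ with anchor $p:X\to G_0$ and associative unital action $a:G_1\times_{G_0}X\to X$ (pullback of $d$ and $p$, whose frame is $Q\otimes_AX$, the quotient of $Q\otimes X$ by $(q\triangleleft b)\otimes x=q\otimes(b\triangleright x)$), with $p\circ a=r\circ\pi_1$. A principal $G$-bundle over $M$ is a $G$-locale with $\pi:X\to M$, $\pi\circ a=\pi\circ\pi_2$, $\langle a,\pi_2\rangle:G_1\times_{G_0}X\to X\times_MX$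 an isomorphism, $\pi$ an open surjection; fully open if $p$ is an open surjection. A $Q$-module is a locale $X$ with a left $Q$-action $q\cdot x$ and unital left $A$-module structure $b\triangleright x$ with $(b\triangleright q)\cdot x=b\triangleright(q\cdot x)$, $(q\triangleleft b)\cdot x=q\cdot(b\triangleright x)$, $b\triangleright(x\wedge y)=(b\triangleright x)\wedge y$. A pre-Hilbert $Q$-module has $\langle-,-\rangle:X\times X\to Q$ with $\langle q\cdot x,y\rangle=q\langle x,y\rangle$, $b\triangleright\langle x,1_X\rangle=\langle b\triangleright x,1_X\rangle$, $\langle\bigvee x_\alpha,y\rangle=\bigvee\langle x_\alpha,y\rangle$, $\langle x,y\rangle=\langle y,x\rangle^*$. A stably supported $Q$-module has in addition a monotone $\varsigma_X:X\to A$ with $\varsigma_X(1_X)=1_A$, $\varsigma_X(x)\triangleright1_X\le\langle x,x\rangle\cdot1_X$, $\varsigma_X(x)\triangleright x=x$, $\varsigma_X(q\cdot x)\le\varsigma_Q(q)$. A $Q$-locale is a stably supported $Q$-module such that $\alpha_*:X\to Q\otimes_AX$, $\alpha_*(x)=\bigvee_{q\cdot y\le x}q\otimes y$, preserves joins, and $\bigvee_{q\cdot y\le x}\upsilon(q)\triangleright y=x$ for all $x$. A principal $Q$-locale over a locale $M$ is a $Q$-locale $X$ such that (P1) there is an open map of locales $\pi:X\to M$ whose direct image $\tilde\varsigma=\pi_!$ satisfies $\tilde\varsigma(1_X)=1_M$; (P2) $\tilde\varsigma(q\cdot x)=\tilde\varsigma(\varsigma_Q(q^* )\triangleright x)$ for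 all $q,x$; (P3) the map $\varphi:X\otimes_MX\to Q\otimes_AX$, $\varphi(x\otimes y)=\bigvee_{q\cdot z\le x}q\otimes(z\wedge y)$, is a frame isomorphism. *)

From Stdlib Require Import FunctionalExtensionality PropExtensionality.

Set Implicit Arguments.
Unset Strict Implicit.

Record Frame := MkFrame {
  fcar :> Type;
  le : fcar -> fcar -> Prop;
  sup : (fcar -> Prop) -> fcar;
  meet : fcar -> fcar -> fcar;
  top : fcar;
  le_refl : forall x, le x x;
  le_trans : forall x y z, le x y -> le y z -> le x z;
  le_antisym : forall x y, le x y -> le y x -> x = y;
  sup_ub : forall S x, S x -> le x (sup S);
  sup_least : forall S y, (forall x, S x -> le x y) -> le (sup S) y;
  meet_lb1 : forall x y, le (meet x y) x;
  meet_lb2 : forall x y, le (meet x y) y;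
  meet_glb : forall x y z, le z x -> le z y -> le z (meet x y);
  top_max : forall x, le x top;
  meet_sup_distr : forall a S,
    meet a (sup S) = sup (fun z => exists s, S s /\ z = meet a s)
}.

Arguments le {f} _ _.
Arguments sup {f} _.
Arguments meet {f} _ _.
Arguments top {f}.

Definition inf {F : Frame} (S : F -> Prop) : F :=
  sup (fun z => forall s, S s -> le z s).

Definition img {A B : Type} (f : A -> B) (S : A -> Prop) : B -> Prop :=
  fun y => exists x, S x /\ y = f x.

Record FHom (A B : Frame) := MkFHom {
  fh :> A -> B;
  fh_sup : forall S, fh (sup S) = sup (img fh S);
  fh_meet : forall x y, fh (meet x y) = meet (fh x) (fh y);
  fh_top : fh top = top
}.

Lemma img_comp {A B C : Type} (f : A -> B) (g : B -> C) (S : A -> Prop) :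
  img g (img f S) = img (fun x => g (f x)) S.
Proof.
  apply functional_extensionality; intro z; apply propositional_extensionality.
  unfold img; split.
  - intros [y [[x [Hx ->]] ->]]; eauto.
  - intros [x [Hx ->]]; exists (f x); split; eauto.
Qed.

Definition fh_comp {A B C : Frame} (g : FHom B C) (f : FHom A B) : FHom A C.
Proof.
  refine (@MkFHom A C (fun x => g (f x)) _ _ _).
  - intro S. rewrite (fh_sup f), (fh_sup g). now rewrite img_comp.
  - intros x y. now rewrite (fh_meet f), (fh_meet g).
  - now rewrite (fh_top f), (fh_top g).
Defined.

Lemma img_id {A : Type} (S : A -> Prop) : img (fun x => x) S = S.
Proof.
  apply functional_extensionality; intro z; apply propositional_extensionality.
  unfold img; split; [intros [x [Hx ->]]; exact Hx | intro H; eauto].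
Qed.

Definition fh_id (A : Frame) : FHom A A.
Proof.
  refine (@MkFHom A A (fun x => x) _ _ _); intros; try reflexivity.
  now rewrite img_id.
Defined.

(* Locales and locale maps.  A locale map f : X -> Y is a frame
   homomorphism f^* : O(Y) -> O(X); we identify a locale with its frame. *)

Definition LMap (X Y : Frame) := FHom Y X.

Definition lcomp {X Y Z : Frame} (g : LMap Y Z) (f : LMap X Y) : LMap X Z :=
  fh_comp f g.                              (* (g o f)^* = f^* o g^* *)
Definition lid (X : Frame) : LMap X X := fh_id X.

Definition lmeq {X Y : Frame} (f g : LMap X Y) : Prop := forall y, f y = g y.

(* direct image f_! : the (candidate) left adjoint of f^* *)
Definition lower {X Y : Frame} (f : LMap X Y) (x : X) : Y :=
  inf (fun y => le x (f y)).

Definition is_open {X Y : Frame} (f : LMap X Y) : Prop :=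
  (forall x y, le (lower f x) y <-> le x (f y)) /\
  (forall x y, lower f (meet x (f y)) = meet (lower f x) y).

Definition is_surj {X Y : Frame} (f : LMap X Y) : Prop :=
  forall y y', f y = f y' -> y = y'.

Definition is_open_surj {X Y : Frame} (f : LMap X Y) : Prop :=
  is_open f /\ is_surj f.

Definition frame_iso {A B : Frame} (h : FHom A B) : Prop :=
  exists k : FHom B A, (forall a, k (h a) = a) /\ (forall b, h (k b) = b).

Record Pullback {X Y Z : Frame} (f : LMap X Z) (g : LMap Y Z) := MkPullback {
  pb : Frame;
  pb1 : LMap pb X;
  pb2 : LMap pb Y;
  pb_comm : lmeq (lcomp f pb1) (lcomp g pb2);
  pb_univ : forall (W : Frame) (h : LMap W X) (k : LMap W Y),
    lmeq (lcomp f h) (lcomp g k) ->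
    exists u : LMap W pb,
      lmeq (lcomp pb1 u) h /\ lmeq (lcomp pb2 u) k /\
      (forall v : LMap W pb, lmeq (lcomp pb1 v) h -> lmeq (lcomp pb2 v) k ->
         lmeq v u)
}.

Arguments pb {X Y Z f g} _.
Arguments pb1 {X Y Z f g} _.
Arguments pb2 {X Y Z f g} _.

Definition tens {X Y Z : Frame} {f : LMap X Z} {g : LMap Y Z}
  (P : Pullback f g) (x : X) (y : Y) : pb P :=
  meet (pb1 P x) (pb2 P y).

(* Convention (the one of the groupoid quantale):
   G2 = G1 x_{G0} G1 is the pullback of r and d (pairs (g,h) with
   r(g) = d(h)), and m(g,h) has d(m(g,h)) = d(g), r(m(g,h)) = r(h).
   Axioms are stated with generalized elements W -> G1. *)

Record OpenGroupoid := MkOpenGroupoid {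
  G0 : Frame;
  G1 : Frame;
  gd : LMap G1 G0;
  gr : LMap G1 G0;
  gu : LMap G0 G1;
  gi : LMap G1 G1;
  G2 : Pullback gr gd;
  gm : LMap (pb G2) G1;
  gd_u : lmeq (lcomp gd gu) (lid G0);
  gr_u : lmeq (lcomp gr gu) (lid G0);
  gd_m : lmeq (lcomp gd gm) (lcomp gd (pb1 G2));
  gr_m : lmeq (lcomp gr gm) (lcomp gr (pb2 G2));
  gm_assoc : forall (W : Frame) (g h k : LMap W G1)
      (w12 w23 wl wr : LMap W (pb G2)),
    lmeq (lcomp (pb1 G2) w12) g -> lmeq (lcomp (pb2 G2) w12) h ->
    lmeq (lcomp (pb1 G2) w23) h -> lmeq (lcomp (pb2 G2) w23) k ->
    lmeq (lcomp (pb1 G2) wl) (lcomp gm w12) -> lmeq (lcomp (pb2 G2) wl) k ->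
    lmeq (lcomp (pb1 G2) wr) g -> lmeq (lcomp (pb2 G2) wr) (lcomp gm w23) ->
    lmeq (lcomp gm wl) (lcomp gm wr);
  gm_unit_l : forall (W : Frame) (g : LMap W G1) (w : LMap W (pb G2)),
    lmeq (lcomp (pb1 G2) w) (lcomp gu (lcomp gd g)) ->
    lmeq (lcomp (pb2 G2) w) g -> lmeq (lcomp gm w) g;
  gm_unit_r : forall (W : Frame) (g : LMap W G1) (w : LMap W (pb G2)),
    lmeq (lcomp (pb1 G2) w) g ->
    lmeq (lcomp (pb2 G2) w) (lcomp gu (lcomp gr g)) -> lmeq (lcomp gm w) g;
  gd_i : lmeq (lcomp gd gi) gr;
  gr_i : lmeq (lcomp gr gi) gd;
  gm_inv_r : forall (W : Frame) (g : LMap W G1) (w : LMap W (pb G2)),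
    lmeq (lcomp (pb1 G2) w) g -> lmeq (lcomp (pb2 G2) w) (lcomp gi g) ->
    lmeq (lcomp gm w) (lcomp gu (lcomp gd g));
  gm_inv_l : forall (W : Frame) (g : LMap W G1) (w : LMap W (pb G2)),
    lmeq (lcomp (pb1 G2) w) (lcomp gi g) -> lmeq (lcomp (pb2 G2) w) g ->
    lmeq (lcomp gm w) (lcomp gu (lcomp gr g));
  gd_open : is_open gd
}.

Section Quantale.
Variable G : OpenGroupoid.
Definition qmul (q q' : G1 G) : G1 G := lower (gm G) (tens (G2 G) q q').
Definition qinv (q : G1 G) : G1 G := gi G q.
Definition qlact (b : G0 G) (q : G1 G) : G1 G := meet (gd G b) q.
Definition qract (q : G1 G) (b : G0 G) : G1 G := meet q (gr G b).
Definition qsupp (q : G1 G) : G0 G := lower (gd G) q.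
Definition qups (q : G1 G) : G0 G := gu G q.
End Quantale.

(* G-locales and principal G-bundles.  G1 x_{G0} X is the pullback GX of
   r and p (whose frame is Q (x)_A X), and p o a = d o pi_1. *)

Definition G_locale (G : OpenGroupoid) (X : Frame) (p : LMap X (G0 G))
  (GX : Pullback (gr G) p) (a : LMap (pb GX) X) : Prop :=
  lmeq (lcomp p a) (lcomp (gd G) (pb1 GX)) /\
  (forall (W : Frame) (x : LMap W X) (w : LMap W (pb GX)),
     lmeq (lcomp (pb1 GX) w) (lcomp (gu G) (lcomp p x)) ->
     lmeq (lcomp (pb2 GX) w) x -> lmeq (lcomp a w) x) /\
  (forall (W : Frame) (g h : LMap W (G1 G)) (x : LMap W X)
     (w2 : LMap W (pb (G2 G))) (wh wg wm : LMap W (pb GX)),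
     lmeq (lcomp (pb1 (G2 G)) w2) g -> lmeq (lcomp (pb2 (G2 G)) w2) h ->
     lmeq (lcomp (pb1 GX) wh) h -> lmeq (lcomp (pb2 GX) wh) x ->
     lmeq (lcomp (pb1 GX) wg) g -> lmeq (lcomp (pb2 GX) wg) (lcomp a wh) ->
     lmeq (lcomp (pb1 GX) wm) (lcomp (gm G) w2) -> lmeq (lcomp (pb2 GX) wm) x ->
     lmeq (lcomp a wm) (lcomp a wg)).

Definition principal_bundle (G : OpenGroupoid) (X : Frame) (p : LMap X (G0 G))
  (GX : Pullback (gr G) p) (a : LMap (pb GX) X)
  (M : Frame) (pi : LMap X M) (XX : Pullback pi pi) : Prop :=
  G_locale a /\
  lmeq (lcomp pi a) (lcomp pi (pb2 GX)) /\
  (exists phi : LMap (pb GX) (pb XX),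
     lmeq (lcomp (pb1 XX) phi) a /\ lmeq (lcomp (pb2 XX) phi) (pb2 GX) /\
     exists psi : LMap (pb XX) (pb GX),
       lmeq (lcomp phi psi) (lid (pb XX)) /\ lmeq (lcomp psi phi) (lid (pb GX))) /\
  is_open_surj pi.

Definition fully_open_principal_bundle (G : OpenGroupoid) (X : Frame)
  (p : LMap X (G0 G)) (GX : Pullback (gr G) p) (a : LMap (pb GX) X)
  (M : Frame) (pi : LMap X M) (XX : Pullback pi pi) : Prop :=
  principal_bundle a XX /\ is_open_surj p.

(* QX together with tQX : Q -> X -> QX plays the role of Q (x)_A X and
   q (x) x; XX (the pullback of pi along itself) provides X (x)_M X. *)

Section QLocale.
Variable G : OpenGroupoid.
Variable X : Frame.
Variable act : G1 G -> X -> X.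
Variable lact : G0 G -> X -> X.
Variable inner : X -> X -> G1 G.
Variable supp : X -> G0 G.

Definition Q_module : Prop :=
  (forall S x, act (sup S) x = sup (img (fun q => act q x) S)) /\
  (forall q S, act q (sup S) = sup (img (act q) S)) /\
  (forall q q' x, act (qmul q q') x = act q (act q' x)) /\
  (forall S x, lact (sup S) x = sup (img (fun b => lact b x) S)) /\
  (forall b S, lact b (sup S) = sup (img (lact b) S)) /\
  (forall b c x, lact (meet b c) x = lact b (lact c x)) /\
  (forall x, lact top x = x) /\
  (forall b q x, act (qlact b q) x = lact b (act q x)) /\
  (forall q b x, act (qract q b) x = act q (lact b x)) /\
  (forall b x y, lact b (meet x y) = meet (lact b x) y).

Definition pre_Hilbert_Q_module : Prop :=
  Q_module /\
  (forall q x y, inner (act q x) y = qmul q (inner x y)) /\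
  (forall b x, qlact b (inner x top) = inner (lact b x) top) /\
  (forall S y, inner (sup S) y = sup (img (fun x => inner x y) S)) /\
  (forall x y, inner x y = qinv (inner y x)).

Definition stably_supported_Q_module : Prop :=
  pre_Hilbert_Q_module /\
  (forall x y, le x y -> le (supp x) (supp y)) /\
  supp top = top /\
  (forall x, le (lact (supp x) top) (act (inner x x) top)) /\
  (forall x, lact (supp x) x = x) /\
  (forall q x, le (supp (act q x)) (qsupp q)).

Variable QX : Frame.
Variable tQX : G1 G -> X -> QX.

Definition alpha_star (x : X) : QX :=
  sup (fun t => exists q y, le (act q y) x /\ t = tQX q y).

Definition Q_locale : Prop :=
  stably_supported_Q_module /\
  (forall S, alpha_star (sup S) = sup (img alpha_star S)) /\
  (forall x, sup (fun z => exists q y, le (act q y) x /\ z = lact (qups q) y) = x).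

Definition principal_Q_locale (M : Frame) (pi : LMap X M)
  (XX : Pullback pi pi) : Prop :=
  Q_locale /\
  (* P1 : pi open, with tilde-varsigma = pi_! and pi_!(1) = 1 *)
  (is_open pi /\ lower pi top = top) /\
  (forall q x, lower pi (act q x) = lower pi (lact (qsupp (qinv q)) x)) /\
  (exists Phi : FHom (pb XX) QX, frame_iso Phi /\
     forall x y, Phi (tens XX x y) =
       sup (fun t => exists q z, le (act q z) x /\ t = tQX q (meet z y))).
End QLocale.

(* Since <a, pi_2> : G1 x_G0 X -> X x_M X is an isomorphism with inverse <theta, pi_2>, the
   maps a and theta are, up to isomorphism, pullback projections of the open maps pi and p, so
   by Beck-Chevalley they are open and q.x = a_!(q (x) x), <x, y> = theta_!(x (x) y) preserve
   joins; the Frobenius law turns the anchor equations into the bimodule axioms.  Each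
   algebraic axiom is a locale-level identity pushed through a pullback square: associativity
   of a gives q.(q'.x) = (qq').x, theta(gx, y) = g theta(x, y) gives <q.x, y> = q<x, y>, and
   theta(y, x) = theta(x, y)^-1 gives <x, y> = <y, x>^*.  The unit section x |-> (u(p x), x)
   yields the support and unit axioms, and phi = <a, pi_2> is the isomorphism of (P3), because
   a^*(x) is the join of the basic tensors q (x) z with q.z <= x.  Pullbacks are specified only
   by their universal property; density of basic tensors comes from comparing them with the
   explicit pullback frame of C-ideals. *)

From Stdlib Require Import FunctionalExtensionality PropExtensionality ProofIrrelevance ClassicalEpsilon.
Set Implicit Arguments.
Unset Strict Implicit.

Section FrameTheory.
Variable F : Frame.
Implicit Types x y z : F.

Lemma meet_comm x y : meet x y = meet y x.
Proof. apply le_antisym; apply meet_glb; auto using meet_lb1, meet_lb2. Qed.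

Lemma meet_assoc x y z : meet (meet x y) z = meet x (meet y z).
Proof.
  apply le_antisym; repeat apply meet_glb.
  - eapply le_trans; [apply meet_lb1|apply meet_lb1].
  - eapply le_trans; [apply meet_lb1|apply meet_lb2].
  - apply meet_lb2.
  - apply meet_lb1.
  - eapply le_trans; [apply meet_lb2|apply meet_lb1].
  - eapply le_trans; [apply meet_lb2|apply meet_lb2].
Qed.

Lemma meet_swap_r x y z : meet (meet x y) z = meet (meet x z) y.
Proof. rewrite !meet_assoc, (meet_comm y z); reflexivity. Qed.

Lemma meet_eq_l x y : le x y -> meet x y = x.
Proof. intro H; apply le_antisym; [apply meet_lb1|apply meet_glb; auto using le_refl]. Qed.

Lemma meet_eq_r x y : le x y -> meet y x = x.
Proof. intro H; rewrite meet_comm; now apply meet_eq_l. Qed.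

Lemma meet_idem x : meet x x = x.
Proof. apply meet_eq_l, le_refl. Qed.

Lemma meet_top_r x : meet x top = x.
Proof. apply meet_eq_l, top_max. Qed.

Lemma meet_top_l x : meet top x = x.
Proof. rewrite meet_comm; apply meet_top_r. Qed.

Lemma meet_mono x x' y y' : le x x' -> le y y' -> le (meet x y) (meet x' y').
Proof.
  intros H1 H2; apply meet_glb.
  - eapply le_trans; [apply meet_lb1|exact H1].
  - eapply le_trans; [apply meet_lb2|exact H2].
Qed.

Lemma meet_le_l x y z : le x z -> le (meet x y) z.
Proof. intro H; eapply le_trans; [apply meet_lb1|exact H]. Qed.

Lemma meet_le_r x y z : le y z -> le (meet x y) z.
Proof. intro H; eapply le_trans; [apply meet_lb2|exact H]. Qed.

Lemma sup_mono (S S' : F -> Prop) :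
  (forall x, S x -> exists y, S' y /\ le x y) -> le (sup S) (sup S').
Proof.
  intro H; apply sup_least; intros x Hx; destruct (H x Hx) as [y [Hy Hxy]].
  eapply le_trans; [exact Hxy|apply sup_ub; exact Hy].
Qed.

Lemma sup_incl (S S' : F -> Prop) : (forall x, S x -> S' x) -> le (sup S) (sup S').
Proof. intro H; apply sup_mono; intros x Hx; exists x; auto using le_refl. Qed.

Lemma le_sup x (S : F -> Prop) y : S y -> le x y -> le x (sup S).
Proof. intros H1 H2; eapply le_trans; [exact H2|apply sup_ub; exact H1]. Qed.

Lemma meet_sup_le a (S : F -> Prop) b :
  (forall s, S s -> le (meet a s) b) -> le (meet a (sup S)) b.
Proof.
  intro H; rewrite meet_sup_distr; apply sup_least; intros z [s [Hs ->]]; auto.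
Qed.

Lemma sup_meet_le a (S : F -> Prop) b :
  (forall s, S s -> le (meet s a) b) -> le (meet (sup S) a) b.
Proof.
  intro H; rewrite meet_comm; apply meet_sup_le; intros s Hs; rewrite meet_comm; auto.
Qed.

Lemma sup_img_meet {A : Type} (h : A -> F) (S : A -> Prop) x :
  meet (sup (img h S)) x = sup (img (fun s => meet (h s) x) S).
Proof.
  rewrite meet_comm, meet_sup_distr. f_equal.
  apply functional_extensionality; intro z; apply propositional_extensionality.
  split.
  - intros [t [[s [Hs ->]] ->]]. exists s; split; auto. apply meet_comm.
  - intros [s [Hs ->]]. exists (h s); split; [exists s; auto|apply meet_comm].
Qed.

Lemma inf_lb (S : F -> Prop) s : S s -> le (inf S) s.
Proof. intro Hs; apply sup_least; intros z Hz; auto. Qed.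

Lemma inf_glb (S : F -> Prop) z : (forall s, S s -> le z s) -> le z (inf S).
Proof. intro H; apply sup_ub; exact H. Qed.

Lemma inf_upset x : inf (fun y => le x y) = x.
Proof. apply le_antisym; [apply inf_lb, le_refl|apply inf_glb; auto]. Qed.

End FrameTheory.

Ltac meet_lb := first [apply le_refl | apply meet_le_l; meet_lb | apply meet_le_r; meet_lb].
Ltac meet_ac := apply le_antisym; repeat apply meet_glb; meet_lb.

Lemma fh_mono {A B : Frame} (h : FHom A B) (x y : A) : le x y -> le (h x) (h y).
Proof. intro H. rewrite <- (meet_eq_l H), fh_meet. apply meet_lb2. Qed.

Section OpenMaps.
Variables X Y : Frame.

Lemma lower_adj (f : LMap X Y) (Hf : is_open f) x y : le (lower f x) y <-> le x (f y).
Proof. apply (proj1 Hf). Qed.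

Lemma lower_unit (f : LMap X Y) (Hf : is_open f) x : le x (f (lower f x)).
Proof. apply (lower_adj Hf), le_refl. Qed.

Lemma lower_frob (f : LMap X Y) (Hf : is_open f) x y :
  lower f (meet x (f y)) = meet (lower f x) y.
Proof. apply (proj2 Hf). Qed.

Lemma lower_mono (f : LMap X Y) (Hf : is_open f) x x' :
  le x x' -> le (lower f x) (lower f x').
Proof. intro H; apply (lower_adj Hf); eapply le_trans; [exact H|apply lower_unit, Hf]. Qed.

Lemma lower_sup (f : LMap X Y) (Hf : is_open f) (S : X -> Prop) :
  lower f (sup S) = sup (img (lower f) S).
Proof.
  apply le_antisym.
  - apply (lower_adj Hf), sup_least; intros s Hs.
    apply (lower_adj Hf), sup_ub; exists s; auto.
  - apply sup_least; intros z [s [Hs ->]]. apply lower_mono, sup_ub; auto.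
Qed.

Lemma lower_eq_of_adj (f : LMap X Y) x (l : Y) :
  (forall y, le l y <-> le x (f y)) -> lower f x = l.
Proof.
  intro H. unfold lower.
  replace (fun y => le x (f y)) with (fun y => le l y); [apply inf_upset|].
  apply functional_extensionality; intro y; apply propositional_extensionality, H.
Qed.

Lemma lower_ext (f g : LMap X Y) x : lmeq f g -> lower f x = lower g x.
Proof.
  intro H; unfold lower; f_equal.
  apply functional_extensionality; intro y; rewrite H; reflexivity.
Qed.

Lemma is_open_ext (f g : LMap X Y) : lmeq f g -> is_open f -> is_open g.
Proof.
  intros H [H1 H2]; split; intros x y.
  - rewrite <- (lower_ext x H), <- H. apply H1.
  - rewrite <- !(lower_ext _ H), <- H. apply H2.
Qed.

Section Iso.
Variables (f : LMap X Y) (f' : LMap Y X).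
Hypotheses (Hff' : forall x, f (f' x) = x) (Hf'f : forall y, f' (f y) = y).

Lemma iso_adj x y : le (f' x) y <-> le x (f y).
Proof.
  split; intro H.
  - rewrite <- (Hff' x). apply fh_mono, H.
  - rewrite <- (Hf'f y). apply fh_mono, H.
Qed.

Lemma lower_iso x : lower f x = f' x.
Proof. apply lower_eq_of_adj, iso_adj. Qed.

Lemma iso_is_open : is_open f.
Proof.
  split; intros x y; rewrite !lower_iso; [apply iso_adj|].
  rewrite fh_meet, Hf'f; reflexivity.
Qed.
End Iso.
End OpenMaps.

Section OpenComp.
Variables X Y Z : Frame.

Lemma lower_comp (g : LMap Y Z) (f : LMap X Y) (Hf : is_open f) (Hg : is_open g) x :
  lower (lcomp g f) x = lower g (lower f x).
Proof.
  apply lower_eq_of_adj; intro z; simpl. rewrite (lower_adj Hg), (lower_adj Hf). tauto.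
Qed.

Lemma is_open_comp (g : LMap Y Z) (f : LMap X Y) :
  is_open f -> is_open g -> is_open (lcomp g f).
Proof.
  intros Hf Hg; split; intros x y; rewrite !lower_comp by assumption; simpl.
  - rewrite (lower_adj Hg), (lower_adj Hf). tauto.
  - rewrite (lower_frob Hf), (lower_frob Hg). reflexivity.
Qed.
End OpenComp.

Lemma lower_top_open_surj {X Y : Frame} (f : LMap X Y) : is_open_surj f -> lower f top = top.
Proof.
  intros [Ho Hs]. apply Hs. rewrite (fh_top f).
  apply le_antisym; [apply top_max|apply lower_unit, Ho].
Qed.

Lemma lmeq_refl {X Y : Frame} (f : LMap X Y) : lmeq f f.
Proof. intro; reflexivity. Qed.

Lemma lmeq_sym {X Y : Frame} (f g : LMap X Y) : lmeq f g -> lmeq g f.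
Proof. intros H y; symmetry; apply H. Qed.

Lemma lmeq_trans {X Y : Frame} (f g h : LMap X Y) : lmeq f g -> lmeq g h -> lmeq f h.
Proof. intros H1 H2 y; rewrite H1; apply H2. Qed.

Lemma lcomp_congr {X Y Z : Frame} (g g' : LMap Y Z) (f f' : LMap X Y) :
  lmeq g g' -> lmeq f f' -> lmeq (lcomp g f) (lcomp g' f').
Proof. intros H1 H2 y; simpl; rewrite H1; apply H2. Qed.

(* Joyal-Tierney: the frame of X x_Z Y is the frame of C-ideals of X x Y, the relations
   closed downwards and under joins in each variable that identify (x /\ f^* z, y) with
   (x, g^* z /\ y). *)
Section CIdealPullback.
Variables X Y Z : Frame.
Variables (f : LMap X Z) (g : LMap Y Z).

Definition down_closed (D : X -> Y -> Prop) : Prop :=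
  forall x y x' y', D x y -> le x' x -> le y' y -> D x' y'.

Record is_cideal (D : X -> Y -> Prop) : Prop := {
  ci_down : down_closed D;
  ci_supl : forall (S : X -> Prop) y, (forall s, S s -> D s y) -> D (sup S) y;
  ci_supr : forall x (S : Y -> Prop), (forall t, S t -> D x t) -> D x (sup S);
  ci_bal : forall x y z, D (meet x (f z)) y <-> D x (meet (g z) y)
}.

Definition hull (U : X -> Y -> Prop) : X -> Y -> Prop :=
  fun x y => forall D, is_cideal D -> (forall a b, U a b -> D a b) -> D x y.

Lemma hull_cideal U : is_cideal (hull U).
Proof.
  split.
  - intros x y x' y' H H1 H2 D HD HU. eapply (ci_down HD); [apply (H D HD HU)|auto|auto].
  - intros S y H D HD HU. apply (ci_supl HD). intros s Hs; apply H; auto.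
  - intros x S H D HD HU. apply (ci_supr HD). intros t Ht; apply H; auto.
  - intros x y z; split; intros H D HD HU; apply (ci_bal HD); apply H; auto.
Qed.

Lemma hull_incl (U : X -> Y -> Prop) x y : U x y -> hull U x y.
Proof. intros H D HD HU; auto. Qed.

Lemma hull_least (U D : X -> Y -> Prop) : is_cideal D -> (forall a b, U a b -> D a b) ->
  forall x y, hull U x y -> D x y.
Proof. intros HD HU x y H; apply H; auto. Qed.

Lemma hull_mono (U V : X -> Y -> Prop) : (forall a b, U a b -> V a b) ->
  forall x y, hull U x y -> hull V x y.
Proof.
  intros H x y Hc. apply (@hull_least U _ (hull_cideal V)); auto.
  intros a b Hab; apply hull_incl; auto.
Qed.

Lemma is_cideal_and D E : is_cideal D -> is_cideal E -> is_cideal (fun x y => D x y /\ E x y).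
Proof.
  intros HD HE; split.
  - intros x y x' y' [H1 H2] Hx Hy; split; eapply ci_down; eauto.
  - intros S y H; split; [apply (ci_supl HD)|apply (ci_supl HE)]; intros s Hs; apply H; auto.
  - intros x S H; split; [apply (ci_supr HD)|apply (ci_supr HE)]; intros s Hs; apply H; auto.
  - intros x y z; rewrite (ci_bal HD), (ci_bal HE); tauto.
Qed.

Lemma is_cideal_true : is_cideal (fun _ _ => True).
Proof. split; unfold down_closed; intros; tauto. Qed.

Lemma hull_meet_down (A U : X -> Y -> Prop) : down_closed A ->
  forall x y, A x y -> hull U x y ->
  hull (fun x y => A x y /\ exists x1 y1, U x1 y1 /\ le x x1 /\ le y y1) x y.
Proof.
  intros HA x y Ha Hc.
  set (V := fun x y => A x y /\ exists x1 y1, U x1 y1 /\ le x x1 /\ le y y1).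
  set (B := hull V).
  assert (HB : is_cideal B) by apply hull_cideal.
  (* the pairs whose meet with every pair of A lies in B form a C-ideal containing U *)
  set (E := fun x y => forall x' y', A x' y' -> B (meet x x') (meet y y')).
  assert (HE : is_cideal E).
  { split.
    - intros x0 y0 x1 y1 H H1 H2 x' y' Ha'. eapply (ci_down HB). apply (H x' y' Ha').
      apply meet_mono; auto using le_refl. apply meet_mono; auto using le_refl.
    - intros S y0 H x' y' Ha'. rewrite meet_comm, meet_sup_distr.
      apply (ci_supl HB). intros z [s [Hs ->]]. rewrite (meet_comm x' s). apply H; auto.
    - intros x0 S H x' y' Ha'. rewrite (meet_comm (sup S)), meet_sup_distr.
      apply (ci_supr HB). intros z [s [Hs ->]]. rewrite (meet_comm y' s). apply H; auto.
    - intros x0 y0 z; split; intros H x' y' Ha'.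
      + rewrite meet_assoc. apply (ci_bal HB). rewrite meet_swap_r. apply H; auto.
      + rewrite meet_swap_r. apply (ci_bal HB). rewrite <- meet_assoc. apply H; auto. }
  assert (HUE : forall a b, U a b -> E a b).
  { intros a b Hu x' y' Ha'. apply hull_incl. split.
    - eapply HA; [exact Ha'|apply meet_lb2|apply meet_lb2].
    - exists a, b; split; [exact Hu|split; apply meet_lb1]. }
  pose proof (hull_least HE HUE Hc x y Ha) as H. rewrite !meet_idem in H. exact H.
Qed.

Record CIdeal := MkCIdeal { cmem : X -> Y -> Prop; cmem_cideal : is_cideal cmem }.

Lemma cideal_ext (A B : CIdeal) : (forall x y, cmem A x y <-> cmem B x y) -> A = B.
Proof.
  destruct A as [a Ha], B as [b Hb]; simpl; intro H.
  assert (a = b).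
  { apply functional_extensionality; intro x; apply functional_extensionality; intro y.
    apply propositional_extensionality; apply H. }
  subst b. f_equal. apply proof_irrelevance.
Qed.

Definition cle (A B : CIdeal) : Prop := forall x y, cmem A x y -> cmem B x y.
Definition csup (S : CIdeal -> Prop) : CIdeal :=
  MkCIdeal (hull_cideal (fun x y => exists A, S A /\ cmem A x y)).
Definition cmeet (A B : CIdeal) : CIdeal := MkCIdeal (is_cideal_and (cmem_cideal A) (cmem_cideal B)).
Definition ctop : CIdeal := MkCIdeal is_cideal_true.

Lemma cmeet_csup (A : CIdeal) (S : CIdeal -> Prop) :
  cmeet A (csup S) = csup (fun z => exists s, S s /\ z = cmeet A s).
Proof.
  apply cideal_ext; intros x y; simpl; split.
  - intros [Ha Hc].
    pose proof (hull_meet_down (ci_down (cmem_cideal A)) Ha Hc) as H.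
    revert H; apply hull_mono. intros a b [Ha' [x1 [y1 [[B [HB Hb]] [H1 H2]]]]].
    exists (cmeet A B); split; [exists B; auto|]. simpl; split; auto.
    eapply (ci_down (cmem_cideal B)); eauto.
  - intro H; split.
    + revert H. apply (hull_least (cmem_cideal A)). intros a b [B [[s [Hs ->]] [H1 H2]]]; auto.
    + revert H. apply hull_mono. intros a b [B [[s [Hs ->]] [H1 H2]]]. exists s; auto.
Qed.

Definition cideal_frame : Frame.
Proof.
  refine (@MkFrame CIdeal cle csup cmeet ctop _ _ _ _ _ _ _ _ _ cmeet_csup).
  - intros A x y H; exact H.
  - intros A B C H1 H2 x y H; auto.
  - intros A B H1 H2; apply cideal_ext; split; auto.
  - intros S A HA x y H. apply hull_incl. exists A; auto.
  - intros S B H x y Hc. revert Hc. apply (hull_least (cmem_cideal B)).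
    intros a b [A [HA Ha]]. apply (H A HA); auto.
  - intros A B x y [H _]; exact H.
  - intros A B x y [_ H]; exact H.
  - intros A B C H1 H2 x y H; split; auto.
  - intros A x y _; exact I.
Defined.

Definition ctens (x0 : X) (y0 : Y) : cideal_frame :=
  MkCIdeal (hull_cideal (fun a b => le a x0 /\ le b y0)).

Lemma ctens_mem x y : cmem (ctens x y) x y.
Proof. apply hull_incl; split; apply le_refl. Qed.

Lemma ctens_least (D : cideal_frame) x y : cmem D x y -> le (ctens x y) D.
Proof.
  intros H a b Hab. simpl in Hab. revert Hab. apply (hull_least (cmem_cideal D)).
  intros a' b' [H1 H2]. eapply (ci_down (cmem_cideal D)); eauto.
Qed.

Lemma ctens_meet x y x' y' : meet (ctens x y) (ctens x' y') = ctens (meet x x') (meet y y').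
Proof.
  apply le_antisym.
  - intros a b [H1 H2]. simpl in H1, H2.
    pose proof (hull_meet_down (ci_down (cmem_cideal (ctens x' y'))) H2 H1) as H. simpl. revert H.
    apply (hull_least (hull_cideal _)). intros a0 b0 [Ha0 [x1 [y1 [[Hx1 Hy1] [Hl1 Hl2]]]]].
    set (A2 := fun (u : X) (v : Y) => le u x /\ le v y).
    assert (HA2 : down_closed A2).
    { intros u v u' v' [h1 h2] h3 h4; split; eapply le_trans; eauto. }
    assert (Hin : A2 a0 b0) by (split; eapply le_trans; eauto).
    pose proof (hull_meet_down HA2 Hin Ha0) as H. revert H. apply hull_mono.
    intros u v [[h1 h2] [u1 [v1 [[h3 h4] [h5 h6]]]]]. split; apply meet_glb; eauto using le_trans.
  - apply meet_glb; apply ctens_least; simpl; eapply (ci_down (cmem_cideal (ctens _ _))); try apply ctens_mem;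
      first [apply meet_lb1|apply meet_lb2].
Qed.

Lemma ctens_sup_l (S : X -> Prop) y : ctens (sup S) y = sup (img (fun x => ctens x y) S).
Proof.
  apply le_antisym.
  - apply ctens_least. simpl. apply (ci_supl (hull_cideal _)). intros s Hs.
    apply hull_incl. exists (ctens s y); split; [exists s; auto| apply ctens_mem].
  - apply sup_least; intros z [s [Hs ->]]. apply ctens_least.
    eapply (ci_down (cmem_cideal _)); [apply ctens_mem| apply sup_ub; auto | apply le_refl].
Qed.

Lemma ctens_sup_r x (S : Y -> Prop) : ctens x (sup S) = sup (img (fun y => ctens x y) S).
Proof.
  apply le_antisym.
  - apply ctens_least. simpl. apply (ci_supr (hull_cideal _)). intros s Hs.
    apply hull_incl. exists (ctens x s); split; [exists s; auto| apply ctens_mem].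
  - apply sup_least; intros z [s [Hs ->]]. apply ctens_least.
    eapply (ci_down (cmem_cideal _)); [apply ctens_mem| apply le_refl | apply sup_ub; auto].
Qed.

Lemma ctens_top : ctens top top = top.
Proof. apply le_antisym. apply top_max. intros a b _. apply hull_incl; split; apply top_max. Qed.

Definition cpb1 : LMap cideal_frame X.
Proof.
  refine (@MkFHom X cideal_frame (fun x => ctens x top) _ _ _).
  - intro S; apply ctens_sup_l.
  - intros x y; rewrite ctens_meet, meet_idem; reflexivity.
  - apply ctens_top.
Defined.

Definition cpb2 : LMap cideal_frame Y.
Proof.
  refine (@MkFHom Y cideal_frame (fun y => ctens top y) _ _ _).
  - intro S; apply ctens_sup_r.
  - intros x y; rewrite ctens_meet, meet_idem; reflexivity.
  - apply ctens_top.
Defined.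

Lemma cpb_tens x y : meet (cpb1 x) (cpb2 y) = ctens x y.
Proof. simpl. rewrite ctens_meet, meet_top_r, meet_top_l; reflexivity. Qed.

Lemma cpb_comm : lmeq (lcomp f cpb1) (lcomp g cpb2).
Proof.
  intro z; simpl. apply (@le_antisym cideal_frame); apply ctens_least.
  - assert (H : cmem (ctens top (g z)) (meet top (f z)) top).
    { apply (proj2 (ci_bal (cmem_cideal _) _ _ _)). rewrite meet_top_r. apply ctens_mem. }
    rewrite meet_top_l in H. exact H.
  - assert (H : cmem (ctens (f z) top) top (meet (g z) top)).
    { apply (proj1 (ci_bal (cmem_cideal _) _ _ _)). rewrite meet_top_l. apply ctens_mem. }
    rewrite meet_top_r in H. exact H.
Qed.

Lemma cideal_dense (D : cideal_frame) : D = sup (fun t => exists x y, cmem D x y /\ t = ctens x y).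
Proof.
  apply le_antisym.
  - intros x y H. apply hull_incl. exists (ctens x y). split; [exists x, y; auto| apply ctens_mem].
  - apply sup_least. intros t [x [y [H ->]]]. apply ctens_least, H.
Qed.

Section Lift.
Variable W : Frame.
Variable h : LMap W X.
Variable k : LMap W Y.
Hypothesis Hhk : lmeq (lcomp f h) (lcomp g k).

Definition clift (D : cideal_frame) : W := sup (fun w => exists x y, cmem D x y /\ w = meet (h x) (k y)).

Lemma clift_mono (D E : cideal_frame) : le D E -> le (clift D) (clift E).
Proof.
  intro H; apply sup_incl. intros w [x [y [Hd ->]]]. exists x, y; split; [apply H, Hd|reflexivity].
Qed.

Lemma clift_hull_bound (U : X -> Y -> Prop) (R : W) :
  (forall x y, U x y -> le (meet (h x) (k y)) R) ->
  forall x y, hull U x y -> le (meet (h x) (k y)) R.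
Proof.
  intros HU. apply hull_least; auto. split.
  - intros x y x' y' H H1 H2. eapply le_trans; [|exact H]. apply meet_mono; apply fh_mono; auto.
  - intros S y H. rewrite fh_sup. apply sup_meet_le. intros s [x [Hx ->]]. auto.
  - intros x S H. rewrite (fh_sup k). apply meet_sup_le. intros s [x' [Hx ->]]. auto.
  - intros x y z. rewrite fh_meet, (fh_meet k).
    assert (E : h (f z) = k (g z)) by apply Hhk.
    rewrite E, meet_assoc. tauto.
Qed.

Lemma clift_ctens x y : clift (ctens x y) = meet (h x) (k y).
Proof.
  apply le_antisym.
  - apply sup_least. intros w [a [b [Hab ->]]]. revert a b Hab.
    apply clift_hull_bound. intros a b [H1 H2]; apply meet_mono; apply fh_mono; auto.
  - apply sup_ub. exists x, y; split; auto. apply ctens_mem.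
Qed.

Definition clift_fh : FHom cideal_frame W.
Proof.
  refine (@MkFHom cideal_frame W clift _ _ _).
  - intro S. apply le_antisym.
    + apply sup_least. intros w [x [y [Hd ->]]]. revert x y Hd. apply clift_hull_bound.
      intros x y [A [HA Hxy]]. apply le_sup with (clift A). exists A; auto.
      apply sup_ub. exists x, y; auto.
    + apply sup_least. intros w [A [HA ->]]. apply clift_mono, sup_ub, HA.
  - intros A B. apply le_antisym.
    + apply meet_glb; apply clift_mono; [apply meet_lb1|apply meet_lb2].
    + unfold clift at 1. apply sup_meet_le. intros w [x [y [Hx ->]]].
      apply meet_sup_le. intros w [x' [y' [Hx' ->]]].
      apply le_sup with (meet (h (meet x x')) (k (meet y y'))).
      * exists (meet x x'), (meet y y'); split; auto. split; simpl.
        -- eapply (ci_down (cmem_cideal A)); eauto using meet_lb1.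
        -- eapply (ci_down (cmem_cideal B)); eauto using meet_lb2.
      * rewrite !fh_meet. repeat apply meet_glb; meet_lb.
  - apply le_antisym; [apply top_max|]. apply sup_ub. exists top, top. split; [exact I|].
    rewrite !fh_top, meet_idem; reflexivity.
Defined.

Lemma clift_pb1 : lmeq (lcomp cpb1 clift_fh) h.
Proof. intro x; simpl. change (clift (ctens x top) = h x). rewrite clift_ctens, fh_top, meet_top_r; reflexivity. Qed.
Lemma clift_pb2 : lmeq (lcomp cpb2 clift_fh) k.
Proof. intro x; simpl. change (clift (ctens top x) = k x). rewrite clift_ctens, fh_top, meet_top_l; reflexivity. Qed.

Lemma clift_uniq (v : LMap W cideal_frame) : lmeq (lcomp cpb1 v) h -> lmeq (lcomp cpb2 v) k -> lmeq v clift_fh.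
Proof.
  intros H1 H2 D.
  assert (HT : forall x y, v (ctens x y) = clift_fh (ctens x y)).
  { intros x y. rewrite <- cpb_tens, !fh_meet.
    pose proof (H1 x) as e1; pose proof (H2 y) as e2; pose proof (clift_pb1 x) as e3;
    pose proof (clift_pb2 y) as e4; simpl in e1, e2, e3, e4 |- *. rewrite e1, e2, e3, e4. reflexivity. }
  rewrite (cideal_dense D). rewrite !fh_sup. f_equal.
  apply functional_extensionality; intro w; apply propositional_extensionality.
  unfold img. split; intros [t [[x [y [Hxy ->]]] ->]]; exists (ctens x y); split; eauto.
Qed.
End Lift.

Definition cideal_pullback : Pullback f g.
Proof.
  refine (@MkPullback X Y Z f g cideal_frame cpb1 cpb2 cpb_comm _).
  intros W h k H. exists (clift_fh H). split; [apply clift_pb1|split; [apply clift_pb2|]].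
  intros v H1 H2. apply clift_uniq; auto.
Defined.

End CIdealPullback.

Section PullbackPairing.
Variables X Y Z : Frame.
Variables (f : LMap X Z) (g : LMap Y Z) (P : Pullback f g).

Lemma pb_commE z : pb1 P (f z) = pb2 P (g z).
Proof. apply (pb_comm P). Qed.

Definition pb_pair {W : Frame} (h : LMap W X) (k : LMap W Y)
  (H : lmeq (lcomp f h) (lcomp g k)) : LMap W (pb P) :=
  proj1_sig (constructive_indefinite_description _ (pb_univ P H)).

Lemma pb_pair_spec {W : Frame} (h : LMap W X) (k : LMap W Y)
  (H : lmeq (lcomp f h) (lcomp g k)) :
  lmeq (lcomp (pb1 P) (pb_pair H)) h /\ lmeq (lcomp (pb2 P) (pb_pair H)) k /\
  (forall v : LMap W (pb P), lmeq (lcomp (pb1 P) v) h -> lmeq (lcomp (pb2 P) v) k ->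
     lmeq v (pb_pair H)).
Proof. unfold pb_pair. destruct (constructive_indefinite_description _ _) as [u Hu]; exact Hu. Qed.

Lemma pb_pair_pb1 {W : Frame} (h : LMap W X) (k : LMap W Y)
  (H : lmeq (lcomp f h) (lcomp g k)) x : pb_pair H (pb1 P x) = h x.
Proof. apply (proj1 (pb_pair_spec H)). Qed.

Lemma pb_pair_pb2 {W : Frame} (h : LMap W X) (k : LMap W Y)
  (H : lmeq (lcomp f h) (lcomp g k)) y : pb_pair H (pb2 P y) = k y.
Proof. apply (proj1 (proj2 (pb_pair_spec H))). Qed.

Lemma pb1_pb_pair {W : Frame} (h : LMap W X) (k : LMap W Y)
  (H : lmeq (lcomp f h) (lcomp g k)) : lmeq (lcomp (pb1 P) (pb_pair H)) h.
Proof. exact (pb_pair_pb1 H). Qed.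

Lemma pb2_pb_pair {W : Frame} (h : LMap W X) (k : LMap W Y)
  (H : lmeq (lcomp f h) (lcomp g k)) : lmeq (lcomp (pb2 P) (pb_pair H)) k.
Proof. exact (pb_pair_pb2 H). Qed.

Lemma pb_ext {W : Frame} (v v' : LMap W (pb P)) :
  lmeq (lcomp (pb1 P) v) (lcomp (pb1 P) v') -> lmeq (lcomp (pb2 P) v) (lcomp (pb2 P) v') ->
  lmeq v v'.
Proof.
  intros H1 H2.
  assert (H : lmeq (lcomp f (lcomp (pb1 P) v)) (lcomp g (lcomp (pb2 P) v))).
  { intro z; simpl. rewrite pb_commE; reflexivity. }
  destruct (pb_pair_spec H) as [_ [_ U]].
  apply (lmeq_trans (U v (lmeq_refl _) (lmeq_refl _))).
  apply lmeq_sym, U; apply lmeq_sym; assumption.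
Qed.

Lemma pb_pair_congr {W : Frame} (h h' : LMap W X) (k k' : LMap W Y)
  (H : lmeq (lcomp f h) (lcomp g k)) (H' : lmeq (lcomp f h') (lcomp g k')) :
  lmeq h h' -> lmeq k k' -> lmeq (pb_pair H) (pb_pair H').
Proof.
  intros E1 E2. apply pb_ext; intro y; simpl.
  - rewrite (pb_pair_pb1 H), (pb_pair_pb1 H'). apply E1.
  - rewrite (pb_pair_pb2 H), (pb_pair_pb2 H'). apply E2.
Qed.

Lemma pb_pair_comp {W V : Frame} (h : LMap W X) (k : LMap W Y) (e : LMap V W)
  (H : lmeq (lcomp f h) (lcomp g k))
  (H' : lmeq (lcomp f (lcomp h e)) (lcomp g (lcomp k e))) :
  lmeq (lcomp (pb_pair H) e) (pb_pair H').
Proof.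
  apply pb_ext; intro y; simpl.
  - rewrite (pb_pair_pb1 H), (pb_pair_pb1 H'). reflexivity.
  - rewrite (pb_pair_pb2 H), (pb_pair_pb2 H'). reflexivity.
Qed.

End PullbackPairing.

Arguments pb_commE {X Y Z f g} P z.
Arguments pb_pair {X Y Z f g} P {W h k} H.
Arguments pb_pair_spec {X Y Z f g} P {W h k} H.
Arguments pb_pair_pb1 {X Y Z f g} P {W h k} H x.
Arguments pb_pair_pb2 {X Y Z f g} P {W h k} H y.
Arguments pb1_pb_pair {X Y Z f g} P {W h k} H.
Arguments pb2_pb_pair {X Y Z f g} P {W h k} H.
Arguments pb_ext {X Y Z f g} P {W} v v'.
Arguments pb_pair_congr {X Y Z f g} P {W} h h' k k' H H' _ _ _.
Arguments pb_pair_comp {X Y Z f g} P {W V} h k e H H' _.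

Section PullbackTensors.
Variables X Y Z : Frame.
Variables (f : LMap X Z) (g : LMap Y Z) (P : Pullback f g).

Let C := cideal_pullback f g.
Definition to_cideal : LMap (pb C) (pb P) := pb_pair P (pb_comm C).
Definition of_cideal : LMap (pb P) (pb C) := pb_pair C (pb_comm P).

Lemma of_to_cideal w : of_cideal (to_cideal w) = w.
Proof.
  apply (pb_ext P (lcomp to_cideal of_cideal) (lid (pb P))); intro x; simpl;
    unfold to_cideal, of_cideal.
  - rewrite (pb_pair_pb1 P), (pb_pair_pb1 C). reflexivity.
  - rewrite (pb_pair_pb2 P), (pb_pair_pb2 C). reflexivity.
Qed.

Lemma to_cideal_tens x y : to_cideal (tens P x y) = ctens f g x y.
Proof.
  unfold tens, to_cideal. rewrite fh_meet, (pb_pair_pb1 P), (pb_pair_pb2 P). apply cpb_tens.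
Qed.

Lemma of_cideal_ctens x y : of_cideal (ctens f g x y) = tens P x y.
Proof.
  rewrite <- cpb_tens. unfold of_cideal.
  rewrite fh_meet, (pb_pair_pb1 C), (pb_pair_pb2 C). reflexivity.
Qed.

Lemma cmem_to_cideal x y (w : pb P) : le (tens P x y) w -> cmem (to_cideal w) x y.
Proof.
  intro H. apply (fh_mono to_cideal) in H. rewrite to_cideal_tens in H. apply H, ctens_mem.
Qed.

Lemma pb_dense (w : pb P) : w = sup (fun t => exists x y, t = tens P x y /\ le t w).
Proof.
  apply le_antisym.
  - rewrite <- (of_to_cideal w) at 1. rewrite (cideal_dense (to_cideal w)), fh_sup.
    apply sup_mono. intros t [z [[x [y [Hxy ->]]] ->]]. exists (tens P x y).
    rewrite of_cideal_ctens. split; [|apply le_refl]. exists x, y; split; auto.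
    rewrite <- of_cideal_ctens, <- (of_to_cideal w). apply fh_mono, ctens_least, Hxy.
  - apply sup_least. intros t [x [y [-> H]]]; exact H.
Qed.

Lemma pb_le_of_tens (w v : pb P) :
  (forall x y, le (tens P x y) w -> le (tens P x y) v) -> le w v.
Proof. intro H. rewrite (pb_dense w). apply sup_least. intros t [x [y [-> Ht]]]. auto. Qed.

Lemma tens_sup_l (S : X -> Prop) y : tens P (sup S) y = sup (img (fun x => tens P x y) S).
Proof.
  unfold tens. rewrite fh_sup, sup_img_meet. reflexivity.
Qed.

Lemma tens_sup_r x (S : Y -> Prop) : tens P x (sup S) = sup (img (fun y => tens P x y) S).
Proof.
  unfold tens. rewrite (fh_sup (pb2 P)), meet_comm, sup_img_meet.
  f_equal. apply functional_extensionality; intro z; apply propositional_extensionality.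
  split; intros [y [Hy ->]]; exists y; split; auto; apply meet_comm.
Qed.

End PullbackTensors.

Section BeckChevalley.
Variables X Y Z : Frame.
Variables (f : LMap X Z) (g : LMap Y Z) (P : Pullback f g).
Hypothesis Hf : is_open f.

Lemma ctens_top_bound y0 x y :
  cmem (ctens f g top y0) x y -> le (meet (g (lower f x)) y) y0.
Proof.
  apply (hull_least (U := fun a b => le a top /\ le b y0)
                    (D := fun a b => le (meet (g (lower f a)) b) y0)).
  - split.
    + intros a b a' b' Hab H1 H2. eapply le_trans; [|exact Hab].
      apply meet_mono; auto. apply fh_mono, lower_mono; auto.
    + intros S b HS. rewrite lower_sup, fh_sup by exact Hf. apply sup_meet_le.
      intros s [s' [[s0 [Hs0 ->]] ->]]. apply HS; auto.
    + intros a S HS. rewrite meet_sup_distr. apply sup_least. intros s [t [Ht ->]]. auto.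
    + intros a b z. rewrite lower_frob, fh_meet, meet_assoc by exact Hf. tauto.
  - intros a b [_ H2]. apply meet_le_r, H2.
Qed.

Definition pb2_push (w : pb P) : Y :=
  sup (fun t => exists x y, le (tens P x y) w /\ t = meet (g (lower f x)) y).

Lemma tens_le_pb2 x y : le (tens P x y) (pb2 P (meet (g (lower f x)) y)).
Proof.
  unfold tens. rewrite fh_meet, <- pb_commE. apply meet_mono; [|apply le_refl].
  apply fh_mono, lower_unit, Hf.
Qed.

Lemma pb2_push_adj w y0 : le (pb2_push w) y0 <-> le w (pb2 P y0).
Proof.
  split; intro H.
  - apply pb_le_of_tens. intros x y Hxy. eapply le_trans; [apply tens_le_pb2|].
    apply fh_mono. eapply le_trans; [|exact H]. apply sup_ub. exists x, y; auto.
  - apply sup_least. intros t [x [y [Hxy ->]]]. apply ctens_top_bound.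
    pose proof (cmem_to_cideal (le_trans Hxy H)) as D.
    unfold to_cideal in D. rewrite (pb_pair_pb2 P) in D. exact D.
Qed.

Lemma lower_pb2 w : lower (pb2 P) w = pb2_push w.
Proof. apply lower_eq_of_adj. intro; apply pb2_push_adj. Qed.

Lemma lower_pb2_tens x y : lower (pb2 P) (tens P x y) = meet (g (lower f x)) y.
Proof.
  rewrite lower_pb2. apply le_antisym.
  - apply pb2_push_adj, tens_le_pb2.
  - apply sup_ub. exists x, y; split; auto using le_refl.
Qed.

Lemma pb2_is_open : is_open (pb2 P).
Proof.
  split; intros w y; rewrite !lower_pb2; [apply pb2_push_adj|].
  apply le_antisym.
  - apply meet_glb.
    + apply pb2_push_adj. eapply le_trans; [apply meet_lb1|]. apply pb2_push_adj, le_refl.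
    + apply pb2_push_adj, meet_lb2.
  - apply sup_meet_le. intros t [x [y' [Hxy ->]]].
    apply sup_ub. exists x, (meet y' y). split.
    + unfold tens. rewrite fh_meet, <- meet_assoc. apply meet_mono; auto using le_refl.
    + apply meet_assoc.
Qed.

End BeckChevalley.

Definition pb_swap {X Y Z : Frame} {f : LMap X Z} {g : LMap Y Z} (P : Pullback f g) :
  Pullback g f.
Proof.
  refine (@MkPullback Y X Z g f (pb P) (pb2 P) (pb1 P) (lmeq_sym (pb_comm P)) _).
  intros W h k H. destruct (pb_univ P (lmeq_sym H)) as [u [H1 [H2 H3]]].
  exists u; split; [exact H2|split; [exact H1|]]. intros v Hv1 Hv2; apply H3; auto.
Defined.

Section BeckChevalleySwap.
Variables X Y Z : Frame.
Variables (f : LMap X Z) (g : LMap Y Z) (P : Pullback f g).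
Hypothesis Hg : is_open g.

Lemma pb1_is_open : is_open (pb1 P).
Proof. exact (pb2_is_open (pb_swap P) Hg). Qed.

Lemma lower_pb1_tens x y : lower (pb1 P) (tens P x y) = meet x (f (lower g y)).
Proof.
  pose proof (lower_pb2_tens (pb_swap P) Hg y x) as e. unfold tens in e |- *. simpl in e.
  rewrite meet_comm, e, meet_comm. reflexivity.
Qed.

End BeckChevalleySwap.

Section Pasting.
Variables X Y Z Y' : Frame.
Variables (f : LMap X Z) (g : LMap Y Z) (P : Pullback f g) (h : LMap Y' Y).
Variables (R : Pullback f (lcomp g h)) (k : LMap (pb R) (pb P)).
Hypotheses (Hk1 : lmeq (lcomp (pb1 P) k) (pb1 R))
           (Hk2 : lmeq (lcomp (pb2 P) k) (lcomp h (pb2 R))).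

Definition pb_paste : Pullback (pb2 P) h.
Proof.
  refine (@MkPullback _ _ _ (pb2 P) h (pb R) k (pb2 R) Hk2 _).
  intros W u v Huv.
  assert (H : lmeq (lcomp f (lcomp (pb1 P) u)) (lcomp (lcomp g h) v)).
  { intro z; simpl. rewrite pb_commE. exact (Huv (g z)). }
  exists (pb_pair R H). split; [|split].
  - apply (pb_ext P); intro y; simpl.
    + rewrite (Hk1 y : k (pb1 P y) = _). apply (pb_pair_pb1 R H).
    + rewrite (Hk2 y : k (pb2 P y) = _). simpl. rewrite (pb_pair_pb2 R H). symmetry; apply Huv.
  - intro y; apply (pb_pair_pb2 R H).
  - intros w Hw1 Hw2. apply (pb_pair_spec R H); [|exact Hw2].
    intro x; simpl. rewrite <- (Hk1 x : k (pb1 P x) = _). apply Hw1.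
Defined.

End Pasting.

Section GroupoidArrows.
Variable G : OpenGroupoid.
Local Notation d := (gd G).
Local Notation r := (gr G).
Local Notation u := (gu G).
Local Notation i := (gi G).
Local Notation m := (gm G).
Local Notation P2 := (G2 G).

Lemma gd_uE y : u (d y) = y. Proof. apply (@gd_u G). Qed.
Lemma gr_uE y : u (r y) = y. Proof. apply (@gr_u G). Qed.
Lemma gd_mE y : m (d y) = pb1 P2 (d y). Proof. apply (@gd_m G). Qed.
Lemma gr_mE y : m (r y) = pb2 P2 (r y). Proof. apply (@gr_m G). Qed.
Lemma gd_iE y : i (d y) = r y. Proof. apply (@gd_i G). Qed.
Lemma gr_iE y : i (r y) = d y. Proof. apply (@gr_i G). Qed.

Ltac groupoid_simpl :=
  repeat (simpl; rewrite ?gd_uE, ?gr_uE, ?gd_mE, ?gr_mE, ?gd_iE, ?gr_iE, ?(pb_commE P2)).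

Definition gmul {W : Frame} (a b : LMap W (G1 G)) (H : lmeq (lcomp r a) (lcomp d b)) :
  LMap W (G1 G) := lcomp m (pb_pair P2 H).

Section GeneralizedArrows.
Variable W : Frame.
Implicit Types a b c : LMap W (G1 G).

Lemma gmul_congr a a' b b' H H' :
  lmeq a a' -> lmeq b b' -> lmeq (@gmul W a b H) (@gmul W a' b' H').
Proof. intros E1 E2. apply lcomp_congr; [apply lmeq_refl|]. apply pb_pair_congr; auto. Qed.

Lemma gd_gmul a b H : lmeq (lcomp d (@gmul W a b H)) (lcomp d a).
Proof. intro y; simpl. rewrite gd_mE. apply (pb_pair_pb1 P2). Qed.

Lemma gr_gmul a b H : lmeq (lcomp r (@gmul W a b H)) (lcomp r b).
Proof. intro y; simpl. rewrite gr_mE. apply (pb_pair_pb2 P2). Qed.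

Lemma gmulA a b c H12 H23 H1 H2 :
  lmeq (@gmul W (@gmul W a b H12) c H1) (@gmul W a (@gmul W b c H23) H2).
Proof.
  apply (gm_assoc (g := a) (h := b) (k := c) (w12 := pb_pair P2 H12) (w23 := pb_pair P2 H23));
    first [apply (pb1_pb_pair P2) | apply (pb2_pb_pair P2)].
Qed.

Lemma gmul_unit_l a H : lmeq (@gmul W (lcomp u (lcomp d a)) a H) a.
Proof. apply gm_unit_l; first [apply (pb1_pb_pair P2) | apply (pb2_pb_pair P2)]. Qed.

Lemma gmul_unit_r a H : lmeq (@gmul W a (lcomp u (lcomp r a)) H) a.
Proof. apply gm_unit_r; first [apply (pb1_pb_pair P2) | apply (pb2_pb_pair P2)]. Qed.

Lemma gmul_inv_r a H : lmeq (@gmul W a (lcomp i a) H) (lcomp u (lcomp d a)).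
Proof. apply gm_inv_r; first [apply (pb1_pb_pair P2) | apply (pb2_pb_pair P2)]. Qed.

Lemma gmul_inv_l a H : lmeq (@gmul W (lcomp i a) a H) (lcomp u (lcomp r a)).
Proof. apply gm_inv_l; first [apply (pb1_pb_pair P2) | apply (pb2_pb_pair P2)]. Qed.

Lemma gmulA_unit a b c Hab Hbc H :
  lmeq (@gmul W a b Hab) (lcomp u (lcomp d c)) -> lmeq (@gmul W a (@gmul W b c Hbc) H) c.
Proof.
  intro E.
  assert (H1 : lmeq (lcomp r (gmul Hab)) (lcomp d c))
    by exact (lmeq_trans (gr_gmul Hab) Hbc).
  assert (Hu : lmeq (lcomp r (lcomp u (lcomp d c))) (lcomp d c))
    by (intro z; groupoid_simpl; reflexivity).
  apply (lmeq_trans (lmeq_sym (gmulA H1 H))).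
  apply (lmeq_trans (gmul_congr H1 Hu E (lmeq_refl c))), gmul_unit_l.
Qed.

Lemma gmul_inv_cancel_l a b Hab H :
  lmeq (@gmul W (lcomp i a) (@gmul W a b Hab) H) b.
Proof.
  assert (Hia : lmeq (lcomp r (lcomp i a)) (lcomp d a)) by (intro z; groupoid_simpl; reflexivity).
  apply (gmulA_unit (Hab := Hia)). apply (lmeq_trans (gmul_inv_l Hia)).
  intro z. exact (Hab (u z)).
Qed.

Lemma gmul_inv_cancel_r a b Hib H :
  lmeq (@gmul W a (@gmul W (lcomp i a) b Hib) H) b.
Proof.
  assert (Hai : lmeq (lcomp r a) (lcomp d (lcomp i a))) by (intro z; groupoid_simpl; reflexivity).
  apply (gmulA_unit (Hab := Hai)). apply (lmeq_trans (gmul_inv_r Hai)).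
  intro z. pose proof (Hib (u z)) as e. simpl in e. rewrite gr_iE in e. exact e.
Qed.

Lemma gmul_inv_unique a b Hab :
  lmeq (@gmul W a b Hab) (lcomp u (lcomp d a)) -> lmeq b (lcomp i a).
Proof.
  intro E.
  assert (H1 : lmeq (lcomp r (lcomp i a)) (lcomp d (gmul Hab))).
  { apply lmeq_trans with (lcomp d a); [intro z; groupoid_simpl; reflexivity|].
    apply lmeq_sym, gd_gmul. }
  assert (H2 : lmeq (lcomp r (lcomp i a)) (lcomp d (lcomp u (lcomp r (lcomp i a)))))
    by (intro z; groupoid_simpl; reflexivity).
  assert (E' : lmeq (lcomp u (lcomp d a)) (lcomp u (lcomp r (lcomp i a))))
    by (intro z; groupoid_simpl; reflexivity).
  apply (lmeq_trans (lmeq_sym (gmul_inv_cancel_l H1))).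
  apply (lmeq_trans (gmul_congr H1 H2 (lmeq_refl _) (lmeq_trans E E'))), gmul_unit_r.
Qed.

End GeneralizedArrows.

Lemma gi_involutive y : i (i y) = y.
Proof.
  assert (H : lmeq (lcomp r (lcomp i (lid (G1 G)))) (lcomp d (lid (G1 G))))
    by (intro z; groupoid_simpl; reflexivity).
  assert (E : lmeq (gmul H) (lcomp u (lcomp d (lcomp i (lid (G1 G)))))).
  { apply (lmeq_trans (gmul_inv_l H)). intro z; groupoid_simpl; reflexivity. }
  symmetry; exact (gmul_inv_unique E y).
Qed.

Lemma gi_is_open : is_open i.
Proof. apply (iso_is_open (f' := i)); apply gi_involutive. Qed.

Lemma lower_gi q : lower i q = i q.
Proof. apply lower_iso; apply gi_involutive. Qed.

Lemma gd_gi_eq : lmeq (lcomp d i) r.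
Proof. apply (@gd_i G). Qed.

Lemma gr_is_open : is_open r.
Proof. exact (is_open_ext gd_gi_eq (is_open_comp gi_is_open (gd_open G))). Qed.

Lemma lower_gr q : lower r q = lower d (i q).
Proof.
  rewrite <- (lower_ext q gd_gi_eq), lower_comp by (apply gi_is_open || apply gd_open).
  rewrite lower_gi. reflexivity.
Qed.

Lemma gmul_comp {W V : Frame} (a b : LMap W (G1 G)) (e : LMap V W) H H' :
  lmeq (lcomp (@gmul W a b H) e) (@gmul V (lcomp a e) (lcomp b e) H').
Proof. intro y. simpl. apply (pb_pair_comp P2 a b e H H'). Qed.

Lemma gm_gmul : lmeq m (gmul (pb_comm P2)).
Proof.
  intro z. simpl. f_equal. symmetry.
  apply (pb_ext P2 (pb_pair P2 (pb_comm P2)) (lid _)); intro x;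
    [exact (pb_pair_pb1 P2 _ x)|exact (pb_pair_pb2 P2 _ x)].
Qed.

(* m is the second projection of G1 x_G0 G1 (pairs with a common domain) precomposed with the
   isomorphism shear : (g, h) |-> (g, gh), whose inverse is (g, k) |-> (g, g^-1 k). *)
Section Shear.
Let D2 := cideal_pullback d d.

Lemma shear_comm : lmeq (lcomp d (pb1 P2)) (lcomp d m).
Proof. intro z; groupoid_simpl; reflexivity. Qed.

Definition shear : LMap (pb P2) (pb D2) := pb_pair D2 shear_comm.

Lemma unshear_comp_comm : lmeq (lcomp r (lcomp i (pb1 D2))) (lcomp d (pb2 D2)).
Proof. intro z; groupoid_simpl. apply (pb_commE D2). Qed.

Lemma unshear_comm : lmeq (lcomp r (pb1 D2)) (lcomp d (gmul unshear_comp_comm)).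
Proof.
  apply lmeq_trans with (lcomp d (lcomp i (pb1 D2))); [intro z; groupoid_simpl; reflexivity|].
  apply lmeq_sym, gd_gmul.
Qed.

Definition unshear : LMap (pb D2) (pb P2) := pb_pair P2 unshear_comm.

Lemma shear_unshear y : shear (unshear y) = y.
Proof.
  apply (pb_ext P2 (lcomp unshear shear) (lid _)); intro x; simpl; unfold unshear.
  - rewrite (pb_pair_pb1 P2). apply (pb_pair_pb1 D2).
  - rewrite (pb_pair_pb2 P2).
    assert (Hi : lmeq (lcomp r (lcomp (lcomp i (pb1 D2)) shear)) (lcomp d (lcomp (pb2 D2) shear)))
      by (intro z; exact (f_equal (fh shear) (unshear_comp_comm z))).
    assert (Hg : lmeq (lcomp (lcomp i (pb1 D2)) shear) (lcomp i (pb1 P2)))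
      by (intro z; exact (pb_pair_pb1 D2 _ (i z))).
    assert (Hm : lmeq (lcomp (pb2 D2) shear) (gmul (pb_comm P2)))
      by (intro z; exact (eq_trans (pb_pair_pb2 D2 _ z) (gm_gmul z))).
    assert (Hc : lmeq (lcomp r (lcomp i (pb1 P2))) (lcomp d (gmul (pb_comm P2)))).
    { apply lmeq_trans with (lcomp d (pb1 P2)); [intro z; groupoid_simpl; reflexivity|].
      apply lmeq_sym, gd_gmul. }
    apply (lmeq_trans (gmul_comp unshear_comp_comm Hi)
             (lmeq_trans (gmul_congr Hi Hc Hg Hm) (gmul_inv_cancel_l Hc))).
Qed.

Lemma unshear_shear y : unshear (shear y) = y.
Proof.
  apply (pb_ext D2 (lcomp shear unshear) (lid _)); intro x.
  - change (unshear (shear (pb1 D2 x)) = pb1 D2 x).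
    unfold shear. rewrite (pb_pair_pb1 D2). apply (pb_pair_pb1 P2).
  - change (unshear (shear (pb2 D2 x)) = pb2 D2 x).
    unfold shear. rewrite (pb_pair_pb2 D2). exact (gmul_inv_cancel_r unshear_comm x).
Qed.

Lemma gm_is_open : is_open m.
Proof.
  apply (is_open_ext (f := lcomp (pb2 D2) shear)).
  - intro z; apply (pb_pair_pb2 D2).
  - apply is_open_comp.
    + apply (iso_is_open (f' := unshear)); [apply shear_unshear|apply unshear_shear].
    + apply pb2_is_open, gd_open.
Qed.

End Shear.
End GroupoidArrows.

Section PrincipalBundle.
Variable G : OpenGroupoid.
Variables (X M : Frame) (p : LMap X (G0 G)) (GX : Pullback (gr G) p) (a : LMap (pb GX) X).
Variables (pi : LMap X M) (XX : Pullback pi pi).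
Variables (theta : LMap (pb XX) (G1 G)) (psi : LMap (pb XX) (pb GX)) (phi : LMap (pb GX) (pb XX)).
Hypotheses (Hpsi1 : lmeq (lcomp (pb1 GX) psi) theta) (Hpsi2 : lmeq (lcomp (pb2 GX) psi) (pb2 XX)).
Hypotheses (Hphi1 : lmeq (lcomp (pb1 XX) phi) a) (Hphi2 : lmeq (lcomp (pb2 XX) phi) (pb2 GX)).
Hypotheses (Hphi_psi : lmeq (lcomp phi psi) (lid (pb XX)))
           (Hpsi_phi : lmeq (lcomp psi phi) (lid (pb GX))).
Hypotheses (Ha : G_locale a) (Hpi_a : lmeq (lcomp pi a) (lcomp pi (pb2 GX))).
Hypotheses (Hpi : is_open_surj pi) (Hp : is_open_surj p).

Local Notation d := (gd G).
Local Notation r := (gr G).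
Local Notation u := (gu G).
Local Notation i := (gi G).
Local Notation m := (gm G).
Local Notation P2 := (G2 G).

Lemma psi_pb1 q : psi (pb1 GX q) = theta q. Proof. apply Hpsi1. Qed.
Lemma psi_pb2 z : psi (pb2 GX z) = pb2 XX z. Proof. apply Hpsi2. Qed.
Lemma phi_pb1 z : phi (pb1 XX z) = a z. Proof. apply Hphi1. Qed.
Lemma phi_pb2 z : phi (pb2 XX z) = pb2 GX z. Proof. apply Hphi2. Qed.
Lemma psi_phi w : psi (phi w) = w. Proof. apply Hphi_psi. Qed.
Lemma phi_psi w : phi (psi w) = w. Proof. apply Hpsi_phi. Qed.
Lemma a_pE b : a (p b) = pb1 GX (d b). Proof. apply (proj1 Ha). Qed.
Lemma a_piE z : a (pi z) = pb2 GX (pi z). Proof. apply Hpi_a. Qed.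

Lemma a_unit (W : Frame) (x : LMap W X) (w : LMap W (pb GX)) :
  lmeq (lcomp (pb1 GX) w) (lcomp u (lcomp p x)) -> lmeq (lcomp (pb2 GX) w) x ->
  lmeq (lcomp a w) x.
Proof. apply (proj1 (proj2 Ha)). Qed.

Lemma a_assoc (W : Frame) (g h : LMap W (G1 G)) (x : LMap W X)
  (w2 : LMap W (pb P2)) (wh wg wm : LMap W (pb GX)) :
  lmeq (lcomp (pb1 P2) w2) g -> lmeq (lcomp (pb2 P2) w2) h ->
  lmeq (lcomp (pb1 GX) wh) h -> lmeq (lcomp (pb2 GX) wh) x ->
  lmeq (lcomp (pb1 GX) wg) g -> lmeq (lcomp (pb2 GX) wg) (lcomp a wh) ->
  lmeq (lcomp (pb1 GX) wm) (lcomp m w2) -> lmeq (lcomp (pb2 GX) wm) x ->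
  lmeq (lcomp a wm) (lcomp a wg).
Proof. apply (proj2 (proj2 Ha)). Qed.

Lemma a_is_open : is_open a.
Proof.
  apply (is_open_ext Hphi1), is_open_comp.
  - apply (iso_is_open (f' := psi)); [apply phi_psi|apply psi_phi].
  - apply pb1_is_open, Hpi.
Qed.

Lemma theta_is_open : is_open theta.
Proof.
  apply (is_open_ext Hpsi1), is_open_comp.
  - apply (iso_is_open (f' := phi)); [apply psi_phi|apply phi_psi].
  - apply pb1_is_open, Hp.
Qed.

Lemma theta_dE b : theta (d b) = pb1 XX (p b).
Proof. rewrite <- psi_pb1, <- a_pE, <- phi_pb1, psi_phi. reflexivity. Qed.

Lemma theta_rE b : theta (r b) = pb2 XX (p b).
Proof. rewrite <- psi_pb1, (pb_commE GX), psi_pb2. reflexivity. Qed.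

Lemma psi_aE z : psi (a z) = pb1 XX z.
Proof. rewrite <- phi_pb1, psi_phi. reflexivity. Qed.

Lemma flip_comm : lmeq (lcomp pi (pb2 XX)) (lcomp pi (pb1 XX)).
Proof. apply lmeq_sym, (pb_comm XX). Qed.

Definition flip : LMap (pb XX) (pb XX) := pb_pair XX flip_comm.

Lemma flip_pb1 z : flip (pb1 XX z) = pb2 XX z. Proof. exact (pb_pair_pb1 XX flip_comm z). Qed.
Lemma flip_pb2 z : flip (pb2 XX z) = pb1 XX z. Proof. exact (pb_pair_pb2 XX flip_comm z). Qed.

Lemma flip_flip v : flip (flip v) = v.
Proof.
  apply (pb_ext XX (lcomp flip flip) (lid _)); intro z; simpl.
  - rewrite flip_pb1, flip_pb2; reflexivity.
  - rewrite flip_pb2, flip_pb1; reflexivity.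
Qed.

(* [rev_pair] is (x, y) |-> (theta(x, y)^-1, x). *)
Lemma rev_pair_comm : lmeq (lcomp r (lcomp i theta)) (lcomp p (pb1 XX)).
Proof. intro b; simpl. rewrite gr_iE, theta_dE. reflexivity. Qed.

Definition rev_pair : LMap (pb XX) (pb GX) := pb_pair GX rev_pair_comm.

Lemma rev_pair_pb1 q : rev_pair (pb1 GX q) = theta (i q).
Proof. exact (pb_pair_pb1 GX rev_pair_comm q). Qed.
Lemma rev_pair_pb2 z : rev_pair (pb2 GX z) = pb1 XX z.
Proof. exact (pb_pair_pb2 GX rev_pair_comm z). Qed.

Lemma theta_inv_comm : lmeq (lcomp r (lcomp i theta)) (lcomp d theta).
Proof. intro b; simpl. rewrite gr_iE. reflexivity. Qed.

Lemma gmul_theta_inv_comm : lmeq (lcomp r (gmul theta_inv_comm)) (lcomp p (pb2 XX)).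
Proof.
  apply (lmeq_trans (gr_gmul theta_inv_comm)). intro b; simpl. apply theta_rE.
Qed.

Lemma a_rev_pair : lmeq (lcomp a rev_pair) (pb2 XX).
Proof.
  (* theta^-1 . x = theta^-1 . (theta . y) = (theta^-1 theta) . y = y *)
  set (w := pb_pair GX gmul_theta_inv_comm).
  apply lmeq_trans with (lcomp a w).
  - apply lmeq_sym, (a_assoc (pb1_pb_pair P2 theta_inv_comm) (pb2_pb_pair P2 theta_inv_comm)
                              Hpsi1 Hpsi2 (pb1_pb_pair GX rev_pair_comm));
      [|apply (pb1_pb_pair GX)|apply (pb2_pb_pair GX)].
    intro z; simpl. rewrite rev_pair_pb2, psi_aE. reflexivity.
  - apply a_unit; [|apply (pb2_pb_pair GX)].
    intro b. simpl. unfold w. rewrite (pb_pair_pb1 GX).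
    rewrite (gmul_inv_l theta_inv_comm b). simpl. apply theta_rE.
Qed.

Lemma rev_pair_phi v : rev_pair (phi v) = flip v.
Proof.
  apply (pb_ext XX (lcomp phi rev_pair) flip); intro z; simpl.
  - rewrite phi_pb1, flip_pb1. apply a_rev_pair.
  - rewrite phi_pb2, rev_pair_pb2, flip_pb2. reflexivity.
Qed.

Lemma theta_flip : lmeq (lcomp theta flip) (lcomp i theta).
Proof. intro q; simpl. rewrite <- psi_pb1, <- rev_pair_phi, phi_psi, rev_pair_pb1. reflexivity. Qed.

Lemma flip_tens x y : flip (tens XX x y) = tens XX y x.
Proof. unfold tens. rewrite fh_meet, flip_pb1, flip_pb2. apply meet_comm. Qed.

Lemma inner_flip x y : lower theta (tens XX x y) = i (lower theta (tens XX y x)).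
Proof.
  assert (Hflip : is_open flip) by (apply (iso_is_open (f' := flip)); apply flip_flip).
  rewrite <- flip_tens, <- (lower_iso flip_flip flip_flip), <- lower_comp
    by (exact Hflip || exact theta_is_open).
  rewrite (lower_ext _ theta_flip), lower_comp, lower_gi
    by (exact theta_is_open || apply gi_is_open).
  reflexivity.
Qed.

(* pb T is the locale of triples (g, h, x); act_pair, mul_pair and mul_act send (g, h, x) to
   (g, hx), (g, h) and (gh, x). *)
Section ActionAssociativity.
Variable T : Pullback r (lcomp p a).
Local Notation Tg := (pb1 T).
Local Notation Tv := (pb2 T).

Lemma act_pair_comm : lmeq (lcomp r Tg) (lcomp p (lcomp a Tv)).
Proof. exact (pb_comm T). Qed.

Definition act_pair : LMap (pb T) (pb GX) := pb_pair GX act_pair_comm.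

Definition act_pair_pullback : Pullback (pb2 GX) a :=
  pb_paste (pb1_pb_pair GX act_pair_comm) (pb2_pb_pair GX act_pair_comm).

Lemma mul_pair_comm : lmeq (lcomp r Tg) (lcomp d (lcomp (pb1 GX) Tv)).
Proof. intro b; simpl. rewrite (pb_commE T); simpl. rewrite a_pE. reflexivity. Qed.

Definition mul_pair : LMap (pb T) (pb P2) := pb_pair P2 mul_pair_comm.

Lemma mul_pair_pb1 q : mul_pair (pb1 P2 q) = Tg q. Proof. exact (pb_pair_pb1 P2 _ q). Qed.
Lemma mul_pair_pb2 q : mul_pair (pb2 P2 q) = Tv (pb1 GX q). Proof. exact (pb_pair_pb2 P2 _ q). Qed.

Lemma mul_act_comm : lmeq (lcomp r (lcomp m mul_pair)) (lcomp p (lcomp (pb2 GX) Tv)).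
Proof. intro b; simpl. rewrite gr_mE, mul_pair_pb2, (pb_commE GX). reflexivity. Qed.

Definition mul_act : LMap (pb T) (pb GX) := pb_pair GX mul_act_comm.

Lemma mul_act_pb1 q : mul_act (pb1 GX q) = mul_pair (m q). Proof. exact (pb_pair_pb1 GX _ q). Qed.
Lemma mul_act_pb2 z : mul_act (pb2 GX z) = Tv (pb2 GX z). Proof. exact (pb_pair_pb2 GX _ z). Qed.

Section MulActLift.
Variables (W : Frame) (e : LMap W (pb P2)) (v : LMap W (pb GX)).
Hypothesis He : lmeq (lcomp m e) (lcomp (pb1 GX) v).

Lemma inner_act_comm : lmeq (lcomp r (lcomp (pb2 P2) e)) (lcomp p (lcomp (pb2 GX) v)).
Proof.
  intro b; simpl. rewrite <- gr_mE.
  exact (eq_trans (He (r b)) (f_equal (fh v) (pb_commE GX b))).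
Qed.

Definition mul_act_inner : LMap W (pb GX) := pb_pair GX inner_act_comm.

Lemma outer_act_comm : lmeq (lcomp r (lcomp (pb1 P2) e)) (lcomp (lcomp p a) mul_act_inner).
Proof.
  intro b; simpl. unfold mul_act_inner. rewrite a_pE, (pb_pair_pb1 GX), (pb_commE P2). reflexivity.
Qed.

Definition mul_act_lift : LMap W (pb T) := pb_pair T outer_act_comm.

Lemma mul_pair_lift : lmeq (lcomp mul_pair mul_act_lift) e.
Proof.
  apply (pb_ext P2); intro q; simpl; unfold mul_act_lift.
  - rewrite mul_pair_pb1, (pb_pair_pb1 T). reflexivity.
  - rewrite mul_pair_pb2, (pb_pair_pb2 T). unfold mul_act_inner. exact (pb_pair_pb1 GX _ _).
Qed.

Lemma mul_act_lift_eq : lmeq (lcomp mul_act mul_act_lift) v.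
Proof.
  apply (pb_ext GX); intro q; simpl.
  - rewrite mul_act_pb1. exact (eq_trans (mul_pair_lift (m q)) (He q)).
  - unfold mul_act_lift, mul_act_inner. rewrite mul_act_pb2, (pb_pair_pb2 T).
    exact (pb_pair_pb2 GX _ _).
Qed.

Lemma mul_act_lift_uniq (t : LMap W (pb T)) :
  lmeq (lcomp mul_pair t) e -> lmeq (lcomp mul_act t) v -> lmeq t mul_act_lift.
Proof.
  intros H1 H2. apply (pb_ext T); intro q; simpl; unfold mul_act_lift.
  - rewrite (pb_pair_pb1 T), <- mul_pair_pb1. apply (H1 (pb1 P2 q)).
  - rewrite (pb_pair_pb2 T).
    apply (pb_ext GX (lcomp Tv t) mul_act_inner); intro z; simpl; unfold mul_act_inner.
    + rewrite (pb_pair_pb1 GX), <- mul_pair_pb2. apply (H1 (pb2 P2 z)).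
    + rewrite (pb_pair_pb2 GX), <- mul_act_pb2. apply (H2 (pb2 GX z)).
Qed.
End MulActLift.

Lemma mul_act_pullback_comm : lmeq (lcomp m mul_pair) (lcomp (pb1 GX) mul_act).
Proof. intro q; simpl. rewrite mul_act_pb1. reflexivity. Qed.

Definition mul_act_pullback : Pullback m (pb1 GX).
Proof.
  refine (@MkPullback _ _ _ m (pb1 GX) (pb T) mul_pair mul_act mul_act_pullback_comm _).
  intros W e v He. exists (mul_act_lift He).
  split; [apply mul_pair_lift|split; [apply mul_act_lift_eq|apply mul_act_lift_uniq]].
Defined.

Lemma a_mul_act : lmeq (lcomp a mul_act) (lcomp a act_pair).
Proof.
  apply (a_assoc (pb1_pb_pair P2 mul_pair_comm) (pb2_pb_pair P2 mul_pair_comm)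
                 (lmeq_refl _) (lmeq_refl _));
    first [apply (pb1_pb_pair GX) | apply (pb2_pb_pair GX)].
Qed.

Lemma act_assoc_at q q' x :
  lower a (tens GX (qmul q q') x) = lower a (tens GX q (lower a (tens GX q' x))).
Proof.
  assert (Hmul : is_open mul_act) by exact (pb2_is_open mul_act_pullback (gm_is_open G)).
  assert (Hact : is_open act_pair) by exact (pb1_is_open act_pair_pullback a_is_open).
  assert (E1 : tens GX (qmul q q') x = lower mul_act (tens mul_act_pullback (tens P2 q q') (pb2 GX x)))
    by (rewrite (lower_pb2_tens mul_act_pullback (gm_is_open G)); reflexivity).
  assert (E2 : tens mul_act_pullback (tens P2 q q') (pb2 GX x)
               = tens act_pair_pullback (pb1 GX q) (tens GX q' x)).
  { unfold tens; simpl. rewrite !fh_meet, mul_pair_pb1, mul_pair_pb2, mul_act_pb2.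
    unfold act_pair. rewrite (pb_pair_pb1 GX). apply meet_assoc. }
  rewrite E1, E2, <- lower_comp, (lower_ext _ a_mul_act), lower_comp
    by (assumption || exact a_is_open).
  f_equal. exact (lower_pb1_tens act_pair_pullback a_is_open _ _).
Qed.

End ActionAssociativity.

(* pb T is the locale of triples (g, x, y) with pi(gx) = pi(y); act_fst, drop_fst, theta_pair
   and theta_act send (g, x, y) to (gx, y), (x, y), (g, theta(x, y)) and (g theta(x, y), y). *)
Section InnerEquivariance.
Variable T : Pullback (lcomp pi a) pi.
Local Notation Tgx := (pb1 T).
Local Notation Ty := (pb2 T).

Lemma act_fst_comm : lmeq (lcomp pi (lcomp a Tgx)) (lcomp pi Ty).
Proof. exact (pb_comm T). Qed.

Definition act_fst : LMap (pb T) (pb XX) := pb_pair XX act_fst_comm.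

Lemma act_fst_pb1 z : act_fst (pb1 XX z) = Tgx (a z). Proof. exact (pb_pair_pb1 XX _ z). Qed.
Lemma act_fst_pb2 z : act_fst (pb2 XX z) = Ty z. Proof. exact (pb_pair_pb2 XX _ z). Qed.

Definition act_fst_pullback : Pullback (pb1 XX) a :=
  @pb_paste X X M (pb GX) pi pi (pb_swap XX) a (pb_swap T) act_fst
    (pb2_pb_pair XX act_fst_comm) (pb1_pb_pair XX act_fst_comm).

Lemma drop_fst_comm : lmeq (lcomp pi (lcomp (pb2 GX) Tgx)) (lcomp pi Ty).
Proof. intro c; simpl. rewrite <- a_piE. apply (pb_commE T). Qed.

Definition drop_fst : LMap (pb T) (pb XX) := pb_pair XX drop_fst_comm.

Lemma drop_fst_pb1 z : drop_fst (pb1 XX z) = Tgx (pb2 GX z). Proof. exact (pb_pair_pb1 XX _ z). Qed.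
Lemma drop_fst_pb2 z : drop_fst (pb2 XX z) = Ty z. Proof. exact (pb_pair_pb2 XX _ z). Qed.

Lemma theta_pair_comm : lmeq (lcomp r (lcomp (pb1 GX) Tgx)) (lcomp d (lcomp theta drop_fst)).
Proof. intro b; simpl. rewrite (pb_commE GX), theta_dE, drop_fst_pb1. reflexivity. Qed.

Definition theta_pair : LMap (pb T) (pb P2) := pb_pair P2 theta_pair_comm.

Lemma theta_pair_pb1 q : theta_pair (pb1 P2 q) = Tgx (pb1 GX q). Proof. exact (pb_pair_pb1 P2 _ q). Qed.
Lemma theta_pair_pb2 q : theta_pair (pb2 P2 q) = drop_fst (theta q). Proof. exact (pb_pair_pb2 P2 _ q). Qed.

Section ThetaPairLift.
Variables (W : Frame) (xy : LMap W (pb XX)) (gk : LMap W (pb P2)).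
Hypothesis Hxy : lmeq (lcomp theta xy) (lcomp (pb2 P2) gk).

Lemma lift_act_comm : lmeq (lcomp r (lcomp (pb1 P2) gk)) (lcomp p (lcomp (pb1 XX) xy)).
Proof.
  intro b; simpl. rewrite (pb_commE P2), <- theta_dE. symmetry. exact (Hxy (d b)).
Qed.

Definition lift_act : LMap W (pb GX) := pb_pair GX lift_act_comm.

Lemma lift_comm : lmeq (lcomp (lcomp pi a) lift_act) (lcomp pi (lcomp (pb2 XX) xy)).
Proof.
  intro c; simpl. unfold lift_act. rewrite a_piE, (pb_pair_pb2 GX); simpl.
  rewrite (pb_commE XX). reflexivity.
Qed.

Definition theta_pair_lift : LMap W (pb T) := pb_pair T lift_comm.

Lemma drop_fst_lift : lmeq (lcomp drop_fst theta_pair_lift) xy.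
Proof.
  apply (pb_ext XX); intro z; simpl; unfold theta_pair_lift.
  - rewrite drop_fst_pb1, (pb_pair_pb1 T). unfold lift_act. exact (pb_pair_pb2 GX _ _).
  - rewrite drop_fst_pb2, (pb_pair_pb2 T). reflexivity.
Qed.

Lemma theta_pair_lift_eq : lmeq (lcomp theta_pair theta_pair_lift) gk.
Proof.
  apply (pb_ext P2); intro q; simpl.
  - unfold theta_pair_lift, lift_act.
    rewrite theta_pair_pb1, (pb_pair_pb1 T). exact (pb_pair_pb1 GX _ _).
  - rewrite theta_pair_pb2. exact (eq_trans (drop_fst_lift (theta q)) (Hxy q)).
Qed.

Lemma theta_pair_lift_uniq (t : LMap W (pb T)) :
  lmeq (lcomp drop_fst t) xy -> lmeq (lcomp theta_pair t) gk -> lmeq t theta_pair_lift.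
Proof.
  intros H1 H2. apply (pb_ext T); intro q; simpl; unfold theta_pair_lift.
  - rewrite (pb_pair_pb1 T).
    apply (pb_ext GX (lcomp Tgx t) lift_act); intro z; simpl; unfold lift_act.
    + rewrite (pb_pair_pb1 GX), <- theta_pair_pb1. apply (H2 (pb1 P2 z)).
    + rewrite (pb_pair_pb2 GX), <- drop_fst_pb1. apply (H1 (pb1 XX z)).
  - rewrite (pb_pair_pb2 T), <- drop_fst_pb2. apply (H1 (pb2 XX q)).
Qed.
End ThetaPairLift.

Lemma drop_fst_pullback_comm : lmeq (lcomp theta drop_fst) (lcomp (pb2 P2) theta_pair).
Proof. intro q; simpl. rewrite theta_pair_pb2. reflexivity. Qed.

Definition drop_fst_pullback : Pullback theta (pb2 P2).
Proof.
  refine (@MkPullback _ _ _ theta (pb2 P2) (pb T) drop_fst theta_pair drop_fst_pullback_comm _).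
  intros W xy gk Hxy. exists (theta_pair_lift Hxy).
  split; [apply drop_fst_lift|split; [apply theta_pair_lift_eq|apply theta_pair_lift_uniq]].
Defined.

Lemma theta_act_comm : lmeq (lcomp r (lcomp m theta_pair)) (lcomp p Ty).
Proof. intro b; simpl. rewrite gr_mE, theta_pair_pb2, theta_rE, drop_fst_pb2. reflexivity. Qed.

Definition theta_act : LMap (pb T) (pb GX) := pb_pair GX theta_act_comm.

Lemma theta_act_pb1 q : theta_act (pb1 GX q) = theta_pair (m q). Proof. exact (pb_pair_pb1 GX _ q). Qed.
Lemma theta_act_pb2 z : theta_act (pb2 GX z) = Ty z. Proof. exact (pb_pair_pb2 GX _ z). Qed.

Lemma a_theta_act : lmeq (lcomp a theta_act) (lcomp a Tgx).
Proof.
  apply (a_assoc (pb1_pb_pair P2 theta_pair_comm) (pb2_pb_pair P2 theta_pair_comm)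
                 (wh := lcomp psi drop_fst) (x := Ty)).
  - intro q; simpl. rewrite psi_pb1. reflexivity.
  - intro z; simpl. rewrite psi_pb2, drop_fst_pb2. reflexivity.
  - apply lmeq_refl.
  - intro z; simpl. rewrite psi_aE, drop_fst_pb1. reflexivity.
  - apply (pb1_pb_pair GX).
  - apply (pb2_pb_pair GX).
Qed.

Lemma theta_act_phi v : theta_act (phi v) = act_fst v.
Proof.
  apply (pb_ext XX (lcomp phi theta_act) act_fst); intro z; simpl.
  - rewrite phi_pb1, act_fst_pb1. apply a_theta_act.
  - rewrite phi_pb2, theta_act_pb2, act_fst_pb2. reflexivity.
Qed.

Lemma theta_act_fst : lmeq (lcomp theta act_fst) (lcomp m theta_pair).
Proof. intro q; simpl. rewrite <- psi_pb1, <- theta_act_phi, phi_psi, theta_act_pb1. reflexivity. Qed.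

Lemma inner_act_at q x y :
  lower theta (tens XX (lower a (tens GX q x)) y) = qmul q (lower theta (tens XX x y)).
Proof.
  assert (Hfst : is_open act_fst) by exact (pb1_is_open act_fst_pullback a_is_open).
  assert (Hpair : is_open theta_pair) by exact (pb2_is_open drop_fst_pullback theta_is_open).
  assert (E1 : tens XX (lower a (tens GX q x)) y
               = lower act_fst (tens act_fst_pullback (pb2 XX y) (tens GX q x))).
  { rewrite (lower_pb1_tens act_fst_pullback a_is_open). apply meet_comm. }
  assert (E2 : tens act_fst_pullback (pb2 XX y) (tens GX q x)
               = tens drop_fst_pullback (tens XX x y) (pb1 P2 q)).
  { unfold tens; simpl. rewrite !fh_meet, act_fst_pb2, drop_fst_pb1, drop_fst_pb2, theta_pair_pb1.
    meet_ac. }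
  rewrite E1, E2, <- lower_comp, (lower_ext _ theta_act_fst), lower_comp
    by (assumption || exact theta_is_open || apply gm_is_open).
  rewrite (lower_pb2_tens drop_fst_pullback theta_is_open).
  unfold qmul, tens. f_equal. apply meet_comm.
Qed.

End InnerEquivariance.

Definition bundle_act (q : G1 G) (x : X) : X := lower a (tens GX q x).
Definition bundle_lact (b : G0 G) (x : X) : X := meet (p b) x.
Definition bundle_inner (x y : X) : G1 G := lower theta (tens XX x y).

Lemma bundle_Q_module : Q_module bundle_act bundle_lact.
Proof.
  unfold bundle_act, bundle_lact.
  split; [|split; [|split; [|split; [|split; [|split; [|split; [|split; [|split]]]]]]]].
  - intros S x. rewrite tens_sup_l, (lower_sup a_is_open), img_comp. reflexivity.
  - intros q S. rewrite tens_sup_r, (lower_sup a_is_open), img_comp. reflexivity.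
  - apply act_assoc_at, cideal_pullback.
  - intros S x. rewrite fh_sup, sup_img_meet. reflexivity.
  - intros b S. apply meet_sup_distr.
  - intros b c x. rewrite fh_meet, meet_assoc. reflexivity.
  - intro x. rewrite fh_top, meet_top_l. reflexivity.
  - intros b q x. unfold qlact.
    replace (tens GX (meet (d b) q) x) with (meet (tens GX q x) (a (p b))).
    + rewrite (lower_frob a_is_open). apply meet_comm.
    + unfold tens. rewrite a_pE, fh_meet, meet_comm, meet_assoc. reflexivity.
  - intros q b x. unfold qract. f_equal. unfold tens.
    rewrite !fh_meet, (pb_commE GX), !meet_assoc. reflexivity.
  - intros b x y. rewrite meet_assoc. reflexivity.
Qed.

Lemma bundle_pre_Hilbert : pre_Hilbert_Q_module bundle_act bundle_lact bundle_inner.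
Proof.
  split; [exact bundle_Q_module|]. unfold bundle_act, bundle_lact, bundle_inner.
  split; [intros; apply inner_act_at, cideal_pullback|].
  split; [|split; [|intros; apply inner_flip]].
  - intros b x. unfold qlact.
    replace (tens XX (meet (p b) x) top) with (meet (tens XX x top) (theta (d b))).
    + rewrite (lower_frob theta_is_open). apply meet_comm.
    + unfold tens. rewrite theta_dE, fh_meet, meet_comm, meet_assoc. reflexivity.
  - intros S y. rewrite tens_sup_l, (lower_sup theta_is_open), img_comp. reflexivity.
Qed.

Lemma unit_section_comm : lmeq (lcomp r (lcomp u p)) (lcomp p (lid X)).
Proof. intro z; simpl. rewrite gr_uE. reflexivity. Qed.

Definition unit_section : LMap X (pb GX) := pb_pair GX unit_section_comm.

Lemma unit_section_tens q z : unit_section (tens GX q z) = meet (p (u q)) z.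
Proof.
  unfold tens, unit_section. rewrite fh_meet, (pb_pair_pb1 GX), (pb_pair_pb2 GX). reflexivity.
Qed.

Lemma unit_section_a z : unit_section (a z) = z.
Proof.
  apply (a_unit (x := lid X)); intro y;
    [exact (pb_pair_pb1 GX _ y)|exact (pb_pair_pb2 GX _ y)].
Qed.

Lemma unit_section_le_lower_a w : le (unit_section w) (lower a w).
Proof. rewrite <- (unit_section_a (lower a w)). apply fh_mono, lower_unit, a_is_open. Qed.

Definition diagonal : LMap X (pb XX) := pb_pair XX (lmeq_refl (lcomp pi (lid X))).

Lemma unit_section_phi w : unit_section (phi w) = diagonal w.
Proof.
  apply (pb_ext XX (lcomp phi unit_section) diagonal); intro z; simpl; unfold diagonal.
  - rewrite phi_pb1, unit_section_a, (pb_pair_pb1 XX). reflexivity.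
  - rewrite phi_pb2, (pb_pair_pb2 XX). exact (pb_pair_pb2 GX _ z).
Qed.

Lemma diagonal_theta q : diagonal (theta q) = p (u q).
Proof.
  rewrite <- psi_pb1, <- unit_section_phi, phi_psi. exact (pb_pair_pb1 GX _ q).
Qed.

Lemma lact_supp_le_act_inner x :
  le (bundle_lact (lower p x) top) (bundle_act (bundle_inner x x) top).
Proof.
  unfold bundle_lact, bundle_act, bundle_inner. rewrite meet_top_r.
  eapply le_trans; [|apply unit_section_le_lower_a]. rewrite unit_section_tens, meet_top_r.
  apply fh_mono, (lower_adj (proj1 Hp)). rewrite <- diagonal_theta.
  eapply le_trans; [|apply fh_mono, lower_unit, theta_is_open].
  unfold tens, diagonal. rewrite fh_meet, (pb_pair_pb1 XX), (pb_pair_pb2 XX), meet_idem.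
  apply le_refl.
Qed.

Lemma supp_act_le q x : le (lower p (bundle_act q x)) (qsupp q).
Proof.
  unfold bundle_act, qsupp.
  assert (E : lmeq (lcomp d (pb1 GX)) (lcomp p a)) by exact (lmeq_sym (proj1 Ha)).
  rewrite <- lower_comp, <- (lower_ext _ E), lower_comp, lower_pb1_tens
    by (exact a_is_open || apply Hp || apply pb1_is_open, Hp || apply gd_open).
  apply lower_mono; [apply gd_open|apply meet_lb1].
Qed.

Lemma bundle_stably_supported :
  stably_supported_Q_module bundle_act bundle_lact bundle_inner (lower p).
Proof.
  split; [exact bundle_pre_Hilbert|].
  split; [intros x y; apply lower_mono, Hp|].
  split; [apply lower_top_open_surj, Hp|].
  split; [exact lact_supp_le_act_inner|].
  split; [|exact supp_act_le].
  intro x. apply meet_eq_r, lower_unit, Hp.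
Qed.

Lemma alpha_star_a x : alpha_star bundle_act (tens GX) x = a x.
Proof.
  unfold alpha_star, bundle_act. rewrite (pb_dense (a x)). f_equal.
  apply functional_extensionality; intro t; apply propositional_extensionality.
  split.
  - intros [q [y [H ->]]]. exists q, y. split; [reflexivity|apply (lower_adj a_is_open), H].
  - intros [q [y [-> H]]]. exists q, y. split; [apply (lower_adj a_is_open), H|reflexivity].
Qed.

Lemma bundle_act_unit x :
  sup (fun z => exists q y, le (bundle_act q y) x /\ z = bundle_lact (qups q) y) = x.
Proof.
  unfold bundle_act, bundle_lact, qups. apply le_antisym.
  - apply sup_least. intros z [q [y [H ->]]].
    rewrite <- unit_section_tens, <- (unit_section_a x). apply fh_mono, (lower_adj a_is_open), H.
  - rewrite <- (unit_section_a x) at 1. rewrite (pb_dense (a x)), fh_sup. apply sup_least.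
    intros z [t [[q [y [-> H]]] ->]]. apply sup_ub. exists q, y.
    split; [apply (lower_adj a_is_open), H|apply unit_section_tens].
Qed.

Lemma bundle_Q_locale : Q_locale bundle_act bundle_lact bundle_inner (lower p) (tens GX).
Proof.
  split; [exact bundle_stably_supported|split; [|exact bundle_act_unit]].
  intro S. rewrite !alpha_star_a, fh_sup. f_equal.
  apply functional_extensionality; intro t; apply propositional_extensionality.
  split; intros [s [Hs ->]]; exists s; split; auto; rewrite alpha_star_a; reflexivity.
Qed.

Lemma lower_pi_act q x :
  lower pi (bundle_act q x) = lower pi (bundle_lact (qsupp (qinv q)) x).
Proof.
  unfold bundle_act, bundle_lact, qsupp, qinv.
  rewrite <- lower_comp, (lower_ext _ Hpi_a), lower_comp, (lower_pb2_tens GX (gr_is_open G)), lower_gr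
    by (exact a_is_open || apply Hpi || apply pb2_is_open, gr_is_open || apply gr_is_open).
  reflexivity.
Qed.

Lemma phi_tens x y : phi (tens XX x y)
  = sup (fun t => exists q z, le (bundle_act q z) x /\ t = tens GX q (meet z y)).
Proof.
  assert (E : forall q w, tens GX q (meet w y) = meet (pb2 GX y) (tens GX q w)).
  { intros q w. unfold tens. rewrite fh_meet, (meet_comm (pb2 GX y)), meet_assoc. reflexivity. }
  unfold tens at 1. rewrite fh_meet, phi_pb1, phi_pb2, (pb_dense (a x)), meet_comm, meet_sup_distr.
  apply le_antisym; apply sup_least.
  - intros z [t [[q [w [-> H]]] ->]]. apply sup_ub. exists q, w.
    split; [apply (lower_adj a_is_open), H|symmetry; apply E].
  - intros z [q [w [H ->]]]. apply sup_ub. exists (tens GX q w).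
    split; [exists q, w; split; auto; apply (lower_adj a_is_open), H|apply E].
Qed.

Lemma bundle_principal_Q_locale :
  principal_Q_locale bundle_act bundle_lact bundle_inner (lower p) (tens GX) XX.
Proof.
  split; [exact bundle_Q_locale|].
  split; [split; [apply Hpi|apply lower_top_open_surj, Hpi]|].
  split; [exact lower_pi_act|].
  exists phi. split; [exists psi; split; [apply psi_phi|apply phi_psi]|exact phi_tens].
Qed.

End PrincipalBundle.

Theorem theorem5p4 (G : OpenGroupoid) (X M : Frame) (p : LMap X (G0 G))
  (GX : Pullback (gr G) p) (a : LMap (pb GX) X) (pi : LMap X M)
  (XX : Pullback pi pi)
  (Hbundle : fully_open_principal_bundle a XX)
  (theta : LMap (pb XX) (G1 G)) (psi : LMap (pb XX) (pb GX))
  (Hpsi1 : lmeq (lcomp (pb1 GX) psi) theta)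
  (Hpsi2 : lmeq (lcomp (pb2 GX) psi) (pb2 XX))
  (Hpsi_inv : forall phi : LMap (pb GX) (pb XX),
     lmeq (lcomp (pb1 XX) phi) a -> lmeq (lcomp (pb2 XX) phi) (pb2 GX) ->
     lmeq (lcomp phi psi) (lid (pb XX)) /\ lmeq (lcomp psi phi) (lid (pb GX))) :
  principal_Q_locale
    (fun q x => lower a (tens GX q x))
    (fun b x => meet (p b) x)
    (fun x y => lower theta (tens XX x y))
    (lower p)
    (tens GX)
    XX.
Proof.
  destruct Hbundle as [[Ha [Hpi_a [[phi [Hphi1 [Hphi2 _]]] Hpi]]] Hp].
  destruct (Hpsi_inv phi Hphi1 Hphi2) as [Hphi_psi Hpsi_phi].
  exact (bundle_principal_Q_locale Hpsi1 Hpsi2 Hphi1 Hphi2 Hphi_psi Hpsi_phi Ha Hpi_a Hpi Hp).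
Qed.
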